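(* Let $u^1,u^2\in\mathcal U_2$ and $u:=u^1\oplus_cu^2$. Then $u\in\mathcal U_2$ and, with $f=f(t,c,x)\in(0,c)$ the function determined by $u_c(t,c,x)=u^1_c(t,f,x)=u^2_c(t,c-f,x)$, $$\frac{u_c}{u_{cc}}(t,c,x)=\frac{u^1_c}{u^1_{cc}}(t,f,x)+\frac{u^2_c}{u^2_{cc}}(t,c-f,x),\qquad \frac{u_{cx^i}}{u_{cc}}(t,c,x)=\frac{u^1_{cx^i}}{u^1_{cc}}(t,f,x)+\frac{u^2_{cx^i}}{u^2_{cc}}(t,c-f,x).$$
   Context: A function on $(0,\infty)$ satisfies the Inada conditions if it is strictly concave, strictly increasing and continuously differentiable on $(0,\infty)$ with derivative tending to $\infty$ at $0$ and to $0$ at $\infty$. $\mathcal U_1$ is the family of measurable real functions $u=u(t,c,x)$ on $[0,1]\times(0,\infty)\times\mathbb R^d$ such that $u(t,\cdot,x)$ satisfies the Inada conditions for each $(t,x)$ and, for some $N=N(u)>0$, $|u(t,e^y,x)|\le e^{N(1+|x|+|y|)}$ for all $(t,x,y)$. $\mathcal U_2$ is the family of $u\in\mathcal U_1$ such that $u_{cc}$ and $u_{cx^i}$ ($i=1,\dots,d$) exist and are continuous in $(c,x)$, $u_{cc}<0$, and for some $N>0$, $-cu_{cc}/u_c+|u_{cx^i}|/u_c\le N$ on $[0,1]\times(0,\infty)\times\mathbb R^d$. The sup-convolution is $(u^1\oplus_cu^2)(t,c,x):=\sup\{u^1(t,c_1,x)+u^2(t,c_2,x):c_1,c_2>0,\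 c_1+c_2=c\}$. *)

From Stdlib Require Import Reals Lra.
From mathcomp Require Import ssreflect ssrbool eqtype ssrnat seq fintype.
Open Scope R_scope.

Section Defs.
Variable d : nat.

Definition vec := 'I_d -> R.

Definition vnorm (x : vec) : R :=
  sqrt (foldr (fun i acc => (x i) ^ 2 + acc) 0 (enum 'I_d)).

Definition vupd (x : vec) (i : 'I_d) (h : R) : vec :=
  fun j => if j == i then h else x j.

Definition fun3 := R -> R -> vec -> R.

Definition dom (t c : R) (x : vec) : Prop := 0 <= t <= 1 /\ 0 < c.

Definition Pt := (R * R * vec)%type.

Definition close (p q : Pt) (e : R) : Prop :=
  Rabs (fst (fst p) - fst (fst q)) < e /\
  Rabs (snd (fst p) - snd (fst q)) < e /\
  forall i, Rabs (snd p i - snd q i) < e.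

Definition open_Pt (A : Pt -> Prop) : Prop :=
  forall p, A p -> exists e, 0 < e /\ forall q, close p q e -> A q.

Definition sigma_algebra (F : (Pt -> Prop) -> Prop) : Prop :=
  F (fun _ => True) /\
  (forall A, F A -> F (fun p => ~ A p)) /\
  (forall An : nat -> Pt -> Prop, (forall n, F (An n)) ->
      F (fun p => exists n, An n p)).

Definition borel (A : Pt -> Prop) : Prop :=
  forall F, sigma_algebra F -> (forall O, open_Pt O -> F O) -> F A.

Definition open_R (V : R -> Prop) : Prop :=
  forall y, V y -> exists e, 0 < e /\ forall z, Rabs (z - y) < e -> V z.

Definition measurable3 (u : fun3) : Prop :=
  forall V, open_R V ->
    borel (fun p => dom (fst (fst p)) (snd (fst p)) (snd p) /\
                    V (u (fst (fst p)) (snd (fst p)) (snd p))).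

Definition Inada (g : R -> R) : Prop :=
  (forall a b l, 0 < a -> 0 < b -> a <> b -> 0 < l < 1 ->
      l * g a + (1 - l) * g b < g (l * a + (1 - l) * b)) /\
  (forall a b, 0 < a -> a < b -> g a < g b) /\
  exists g' : R -> R,
    (forall c, 0 < c -> derivable_pt_lim g c (g' c)) /\
    (forall c, 0 < c -> continuity_pt g' c) /\
    (forall M, exists e, 0 < e /\ forall c, 0 < c < e -> M < g' c) /\
    (forall e, 0 < e -> exists M, forall c, M < c -> Rabs (g' c) < e).

Definition U1 (u : fun3) : Prop :=
  measurable3 u /\
  (forall t x, 0 <= t <= 1 -> Inada (fun c => u t c x)) /\
  exists N, 0 < N /\
    forall t x y, 0 <= t <= 1 ->
      Rabs (u t (exp y) x) <= exp (N * (1 + vnorm x + Rabs y)).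

Definition is_dc (u uc : fun3) : Prop :=
  forall t c x, dom t c x -> derivable_pt_lim (fun c' => u t c' x) c (uc t c x).

Definition is_dx (u : fun3) (i : 'I_d) (ux : fun3) : Prop :=
  forall t c x, dom t c x ->
    derivable_pt_lim (fun h => u t c (vupd x i h)) (x i) (ux t c x).

Definition cont_cx (g : fun3) : Prop :=
  forall t c x, dom t c x -> forall e, 0 < e -> exists del, 0 < del /\
    forall c' x', 0 < c' -> Rabs (c' - c) < del ->
      (forall j, Rabs (x' j - x j) < del) ->
      Rabs (g t c' x' - g t c x) < e.

Definition U2 (u : fun3) : Prop :=
  U1 u /\
  exists (uc ucc : fun3) (ucx : 'I_d -> fun3),
    is_dc u uc /\ is_dc uc ucc /\ (forall i, is_dx uc i (ucx i)) /\
    cont_cx ucc /\ (forall i, cont_cx (ucx i)) /\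
    (forall t c x, dom t c x -> ucc t c x < 0) /\
    exists N, 0 < N /\
      forall t c x i, dom t c x ->
        - c * ucc t c x / uc t c x + Rabs (ucx i t c x) / uc t c x <= N.

Definition is_supconv (u1 u2 u : fun3) : Prop :=
  forall t c x, dom t c x ->
    is_lub (fun v => exists c1, 0 < c1 < c /\ v = u1 t c1 x + u2 t (c - c1) x)
           (u t c x).

End Defs.

(* Since [u1_c] and [u2_c] decrease strictly from [+oo] to [0], the first-order condition
   [u1_c(f) = u2_c(c - f)] has a unique solution [f] in [(0, c)]; it is the optimal split, so
   [u(c) = u1(f) + u2(c - f)].  As [u] is concave and lies above [c' |-> u1(f + c' - c) + u2(c - f)],
   with contact at [c], the envelope argument gives [u_c = u1_c(f)].  The gap
   [u2_c(c - y) - u1_c(y)] is increasing in [y] and continuous in [(c, x)], so [f] is continuous, and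
   differentiating the first-order condition implicitly yields
     [u_cc = u1_cc u2_cc / (u1_cc + u2_cc)],
     [u_cx = (u1_cc u2_cx + u2_cc u1_cx) / (u1_cc + u2_cc)],
   which are the stated identities.  The U_2 bound holds because [-c u_cc + |u_cx|] is at most a
   weighted mean of the corresponding quantities of [u1] at [f] and [u2] at [c - f].
   Measurability follows by restricting the supremum to countably many splits, and the growth
   bound from [u1(c/2) + u2(c/2) <= u(c) <= u1(c) + u2(c)]. *)

From Stdlib Require Import Reals Lra Lia ZArith Classical ClassicalEpsilon FunctionalExtensionality PropExtensionality.
From mathcomp Require Import ssrbool eqtype seq fintype.
Open Scope R_scope.

Section Tends.
Variable X : Type.
Variable N : R -> X -> Prop.
Hypothesis N_mono : forall d1 d2 p, 0 < d1 -> d1 <= d2 -> N d1 p -> N d2 p.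

(* [N dl] is a basis of neighbourhoods shrinking with [dl]; [tends g l] is the limit of [g] along it. *)
Definition tends (g : X -> R) (l : R) :=
  forall e, 0 < e -> exists dl, 0 < dl /\ forall p, N dl p -> Rabs (g p - l) < e.

Lemma N_Rmin d1 d2 p : 0 < d1 -> 0 < d2 -> N (Rmin d1 d2) p -> N d1 p /\ N d2 p.
Proof.
  intros h1 h2 h. assert (0 < Rmin d1 d2) by (apply Rmin_glb_lt; lra).
  split; eapply N_mono; eauto. apply Rmin_l. apply Rmin_r.
Qed.

Lemma tends_const a : tends (fun _ => a) a.
Proof. intros e He. exists 1. split. lra. intros p _. unfold Rminus. rewrite Rplus_opp_r, Rabs_R0. lra. Qed.

Lemma tends_plus f g a b : tends f a -> tends g b -> tends (fun p => f p + g p) (a + b).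
Proof.
  intros hf hg e He.
  destruct (hf (e/2)) as [d1 [H1 K1]]. lra.
  destruct (hg (e/2)) as [d2 [H2 K2]]. lra.
  exists (Rmin d1 d2). split. apply Rmin_glb_lt; lra.
  intros p hp. destruct (N_Rmin _ _ _ H1 H2 hp) as [p1 p2].
  specialize (K1 p p1). specialize (K2 p p2).
  replace (f p + g p - (a + b)) with ((f p - a) + (g p - b)) by ring.
  eapply Rle_lt_trans. apply Rabs_triang. lra.
Qed.

Lemma tends_opp f a : tends f a -> tends (fun p => - f p) (- a).
Proof.
  intros hf e He. destruct (hf e He) as [d [H K]]. exists d. split. auto.
  intros p hp. replace (- f p - - a) with (- (f p - a)) by ring. rewrite Rabs_Ropp. auto.
Qed.

Lemma tends_minus f g a b : tends f a -> tends g b -> tends (fun p => f p - g p) (a - b).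
Proof. intros. apply (tends_plus f (fun p => - g p) a (- b)); auto. apply tends_opp; auto. Qed.

Lemma tends_mult f g a b : tends f a -> tends g b -> tends (fun p => f p * g p) (a * b).
Proof.
  intros hf hg e He.
  assert (Ha : 0 <= Rabs a) by apply Rabs_pos.
  assert (Hb : 0 <= Rabs b) by apply Rabs_pos.
  destruct (hf (e / (2 * (Rabs b + 1)))) as [d1 [H1 K1]].
  { apply Rdiv_lt_0_compat; lra. }
  destruct (hg (Rmin 1 (e / (2 * (Rabs a + 1))))) as [d2 [H2 K2]].
  { apply Rmin_glb_lt. lra. apply Rdiv_lt_0_compat; lra. }
  exists (Rmin d1 d2). split. apply Rmin_glb_lt; lra.
  intros p hp. destruct (N_Rmin _ _ _ H1 H2 hp) as [p1 p2].
  specialize (K1 p p1). specialize (K2 p p2).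
  assert (K2a : Rabs (g p - b) < 1) by (eapply Rlt_le_trans; [exact K2| apply Rmin_l]).
  assert (K2b : Rabs (g p - b) < e / (2 * (Rabs a + 1))) by (eapply Rlt_le_trans; [exact K2| apply Rmin_r]).
  assert (Hg : Rabs (g p) <= Rabs b + 1).
  { replace (g p) with ((g p - b) + b) by ring. eapply Rle_trans. apply Rabs_triang. lra. }
  replace (f p * g p - a * b) with ((f p - a) * g p + a * (g p - b)) by ring.
  eapply Rle_lt_trans. apply Rabs_triang. rewrite !Rabs_mult.
  assert (E1 : Rabs (f p - a) * Rabs (g p) < e / 2).
  { apply Rle_lt_trans with (Rabs (f p - a) * (Rabs b + 1)).
    - apply Rmult_le_compat_l. apply Rabs_pos. lra.
    - replace (e / 2) with (e / (2 * (Rabs b + 1)) * (Rabs b + 1)) by (field; lra).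
      apply Rmult_lt_compat_r; lra. }
  assert (E2 : Rabs a * Rabs (g p - b) <= e / 2).
  { replace (e / 2) with ((Rabs a + 1) * (e / (2 * (Rabs a + 1)))) by (field; lra).
    apply Rmult_le_compat; try apply Rabs_pos; lra. }
  lra.
Qed.

Lemma tends_inv f a : tends f a -> a <> 0 -> tends (fun p => / f p) (/ a).
Proof.
  intros hf ha e He.
  assert (Pa : 0 < Rabs a) by (apply Rabs_pos_lt; auto).
  destruct (hf (Rmin (Rabs a / 2) (e * (Rabs a * Rabs a) / 2))) as [d [H K]].
  { apply Rmin_glb_lt. lra. apply Rdiv_lt_0_compat. apply Rmult_lt_0_compat; nra. lra. }
  exists d. split. auto. intros p hp. specialize (K p hp).
  assert (K1 : Rabs (f p - a) < Rabs a / 2) by (eapply Rlt_le_trans; [exact K| apply Rmin_l]).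
  assert (K2 : Rabs (f p - a) < e * (Rabs a * Rabs a) / 2) by (eapply Rlt_le_trans; [exact K| apply Rmin_r]).
  assert (Hf : Rabs a / 2 < Rabs (f p)).
  { pose proof (Rabs_triang (a - f p) (f p)) as T. replace (a - f p + f p) with a in T by ring.
    rewrite <- Rabs_Ropp in K1. replace (- (f p - a)) with (a - f p) in K1 by ring. lra. }
  assert (fp0 : f p <> 0). { intro Z. rewrite Z, Rabs_R0 in Hf. lra. }
  replace (/ f p - / a) with ((a - f p) / (f p * a)) by (field; auto).
  unfold Rdiv. rewrite Rabs_mult, Rabs_inv, Rabs_mult.
  rewrite <- Rabs_Ropp. replace (- (a - f p)) with (f p - a) by ring.
  apply (Rmult_lt_reg_r (Rabs (f p) * Rabs a)). nra.
  rewrite Rmult_assoc, Rinv_l by nra. rewrite Rmult_1_r.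
  eapply Rlt_le_trans. exact K2.
  replace (e * (Rabs a * Rabs a) / 2) with (e * (Rabs a / 2 * Rabs a)) by field.
  apply Rmult_le_compat_l. lra. apply Rmult_le_compat_r; lra.
Qed.

Lemma tends_div f g a b : tends f a -> tends g b -> b <> 0 -> tends (fun p => f p / g p) (a / b).
Proof. intros. apply (tends_mult f (fun p => / g p)); auto. apply tends_inv; auto. Qed.

Lemma tends_eventually_ext f g a d0 : 0 < d0 -> (forall p, N d0 p -> f p = g p) ->
  tends f a -> tends g a.
Proof.
  intros h0 hfg hf e He. destruct (hf e He) as [d [H K]].
  exists (Rmin d d0). split. apply Rmin_glb_lt; lra.
  intros p hp. destruct (N_Rmin _ _ _ H h0 hp) as [p1 p2]. rewrite <- hfg by auto. auto.
Qed.

End Tends.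

Definition near0 (dl h : R) : Prop := h <> 0 /\ Rabs h < dl.

Lemma near0_mono d1 d2 h : 0 < d1 -> d1 <= d2 -> near0 d1 h -> near0 d2 h.
Proof. unfold near0. intros; lra. Qed.

Lemma derivable_pt_lim_tends g x l :
  derivable_pt_lim g x l <-> tends R near0 (fun h => (g (x + h) - g x) / h) l.
Proof.
  split.
  - intros H e He. destruct (H e He) as [[dl Hd] K]. exists dl. split. auto.
    intros p [p1 p2]. apply K; auto.
  - intros H e He. destruct (H e He) as [dl [Hd K]]. exists (mkposreal dl Hd).
    intros h h1 h2. apply K. split; auto.
Qed.

Lemma derivable_pt_lim_cont g c l : derivable_pt_lim g c l ->
  forall e, 0 < e -> exists dl, 0 < dl /\ forall y, Rabs (y - c) < dl -> Rabs (g y - g c) < e.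
Proof.
  intros H e He.
  assert (C : continuity_pt g c). { apply derivable_continuous_pt. exists l. exact H. }
  destruct (C e He) as [dl [Hd K]]. exists dl. split. auto.
  intros y hy. destruct (Req_dec y c) as [E|E].
  - subst. unfold Rminus. rewrite Rplus_opp_r, Rabs_R0. auto.
  - apply (K y). split. split. exact I. auto. exact hy.
Qed.

Lemma MVT_between (g g' : R -> R) a b :
  (forall s, Rmin a b <= s <= Rmax a b -> derivable_pt_lim g s (g' s)) ->
  exists xi, Rmin a b <= xi <= Rmax a b /\ g b - g a = g' xi * (b - a).
Proof.
  intros H. destruct (Rtotal_order a b) as [lt|[eq|gt]].
  - destruct (MVT_cor2 g g' a b lt) as [xi [E1 E2]].
    { intros s hs. apply H. rewrite Rmin_left, Rmax_right; lra. }
    exists xi. rewrite Rmin_left, Rmax_right by lra. split. lra. auto.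
  - subst. exists b. rewrite Rmin_left, Rmax_left by lra. split. lra. ring.
  - destruct (MVT_cor2 g g' b a gt) as [xi [E1 E2]].
    { intros s hs. apply H. rewrite Rmin_right, Rmax_left; lra. }
    exists xi. rewrite Rmin_right, Rmax_left by lra. split. lra.
    replace (g b - g a) with (- (g a - g b)) by ring. rewrite E1. ring.
Qed.

Lemma between_Rabs a b s : Rmin a b <= s <= Rmax a b -> Rabs (s - a) <= Rabs (b - a).
Proof. unfold Rmin, Rmax. intros H. destruct (Rle_dec a b); unfold Rabs; repeat destruct Rcase_abs; lra. Qed.

Lemma MVT_Rabs_bound (g g' : R -> R) a b M :
  (forall s, Rmin a b <= s <= Rmax a b -> derivable_pt_lim g s (g' s) /\ Rabs (g' s) <= M) ->
  Rabs (g b - g a) <= M * Rabs (b - a).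
Proof.
  intros H. destruct (MVT_between g g' a b) as [xi [Hxi E]].
  { intros s hs. apply H, hs. }
  rewrite E, Rabs_mult. apply Rmult_le_compat_r. apply Rabs_pos. apply H, Hxi.
Qed.

Lemma neg_derivative_decreasing (g g' : R -> R) a b : a < b ->
  (forall s, a <= s <= b -> derivable_pt_lim g s (g' s)) ->
  (forall s, a <= s <= b -> g' s < 0) -> g b < g a.
Proof.
  intros hab hd hn. destruct (MVT_cor2 g g' a b hab hd) as [xi [E1 E2]].
  assert (g' xi < 0) by (apply hn; lra).
  assert (g' xi * (b - a) < 0) by (apply Rmult_neg_pos; lra). lra.
Qed.

Lemma increasing_derivative_ge0 g c l : 0 < c ->
  (forall a b, 0 < a -> a < b -> g a < g b) -> derivable_pt_lim g c l -> 0 <= l.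
Proof.
  intros hc hinc H. destruct (Rle_or_lt 0 l) as [|hl]; auto. exfalso.
  destruct (H (- l / 2)) as [[dl Hd] K]. lra. simpl in K.
  set (h := Rmin (dl / 2) (c / 2)).
  assert (hp : 0 < h) by (apply Rmin_glb_lt; lra).
  assert (h <= dl / 2) by apply Rmin_l.
  assert (HK : Rabs ((g (c + h) - g c) / h - l) < - l / 2).
  { apply K. lra. rewrite Rabs_right; lra. }
  assert (g c < g (c + h)) by (apply hinc; lra).
  assert (0 < (g (c + h) - g c) / h) by (apply Rdiv_lt_0_compat; lra).
  apply Rabs_def2 in HK. lra.
Qed.

Lemma Rabs_le_between a b : Rabs a <= b -> - b <= a <= b.
Proof. unfold Rabs. destruct Rcase_abs; lra. Qed.

Lemma exp_le a b : a <= b -> exp a <= exp b.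
Proof. intros [h | ->]. left. apply exp_increasing. auto. lra. Qed.

(* A concave [G] lying above a differentiable [g] up to a constant, with contact at [b],
   has the same derivative there: its one-sided slopes are squeezed between those of [g]. *)
Lemma derivable_pt_lim_squeeze (g G : R -> R) a b l r : 0 < r ->
  derivable_pt_lim g a l ->
  (forall h, Rabs h < r -> g (a + h) - g a <= G (b + h) - G b) ->
  (forall h, Rabs h < r -> G (b + h) - G b <= G b - G (b - h)) ->
  derivable_pt_lim G b l.
Proof.
  intros hr D Hge Hconc e He. destruct (D e He) as [[dl Hdl] K]. simpl in K.
  assert (Hm : 0 < Rmin dl r) by (apply Rmin_glb_lt; lra).
  exists (mkposreal _ Hm). simpl. intros h hh hr'.
  pose proof (Rmin_l dl r). pose proof (Rmin_r dl r).
  assert (K1 := K h hh ltac:(lra)).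
  assert (K2 := K (- h) ltac:(lra) ltac:(rewrite Rabs_Ropp; lra)).
  assert (B1 := Hge h ltac:(lra)).
  assert (B2 := Hge (- h) ltac:(rewrite Rabs_Ropp; lra)).
  assert (B3 := Hconc h ltac:(lra)).
  replace (b + - h) with (b - h) in B2 by ring.
  set (Dq := (G (b + h) - G b) / h) in *.
  set (L1 := (g (a + h) - g a) / h) in *.
  set (L2 := (g (a + - h) - g a) / - h) in *.
  assert (Dq * h = G (b + h) - G b) by (unfold Dq; field; auto).
  assert (L1 * h = g (a + h) - g a) by (unfold L1; field; auto).
  assert (L2 * - h = g (a + - h) - g a) by (unfold L2; field; auto).
  apply Rabs_def2 in K1. apply Rabs_def2 in K2. apply Rabs_def1.
  - destruct (Rlt_or_le 0 h).
    + assert (Dq <= L2) by (apply (Rmult_le_reg_r h); lra). lra.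
    + assert (Dq <= L1) by (apply (Rmult_le_reg_r (- h)); lra). lra.
  - destruct (Rlt_or_le 0 h).
    + assert (L1 <= Dq) by (apply (Rmult_le_reg_r h); lra). lra.
    + assert (L2 <= Dq) by (apply (Rmult_le_reg_r (- h)); lra). lra.
Qed.

Lemma between_Rabs_lt a b s p r : Rmin a b <= s <= Rmax a b ->
  Rabs (a - p) < r -> Rabs (b - p) < r -> Rabs (s - p) < r.
Proof.
  unfold Rmin, Rmax. intros H ha hb. apply Rabs_def2 in ha. apply Rabs_def2 in hb.
  apply Rabs_def1; destruct (Rle_dec a b); lra.
Qed.

Lemma vupd_eq d (x : vec d) i h : vupd d x i h i = h.
Proof. unfold vupd. now rewrite eqxx. Qed.

Lemma vupd_vupd d (x : vec d) i h h' : vupd d (vupd d x i h) i h' = vupd d x i h'.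
Proof.
  apply functional_extensionality. intro j. unfold vupd. now destruct (@eqP _ j i).
Qed.

Lemma vupd_id d (x : vec d) i : vupd d x i (x i) = x.
Proof.
  apply functional_extensionality. intro j. unfold vupd. now destruct (@eqP _ j i) as [->|].
Qed.

Lemma vupd_close d (x y : vec d) i h r : Rabs (h - x i) < r ->
  (forall j, Rabs (y j - x j) < r) -> forall j, Rabs (vupd d y i h j - x j) < r.
Proof. intros hh hy j. unfold vupd. destruct (@eqP _ j i) as [->|]; auto. Qed.

Lemma vnorm_nonneg d (x : vec d) : 0 <= vnorm d x.
Proof. apply sqrt_pos. Qed.

Fixpoint mixL d (x x' : vec d) (L : list 'I_d) : vec d :=
  match L with
  | nil => x
  | cons j L' => vupd d (mixL d x x' L') j (x' j)
  end.

Lemma mixL_spec d (x x' : vec d) L j : mixL d x x' L j = if j \in L then x' j else x j.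
Proof.
  induction L as [|j0 L IH]; simpl. reflexivity.
  rewrite in_cons. unfold vupd. rewrite IH. now destruct (@eqP _ j j0) as [->|].
Qed.

Lemma mixL_enum d (x x' : vec d) : mixL d x x' (enum 'I_d) = x'.
Proof.
  apply functional_extensionality. intro j. rewrite mixL_spec.
  match goal with |- (if ?b then _ else _) = _ => assert (Hb : b = true) end.
  { exact (mem_enum _ j). }
  now rewrite Hb.
Qed.

Lemma mixL_close d (x x' : vec d) L j : Rabs (mixL d x x' L j - x j) <= Rabs (x' j - x j).
Proof.
  rewrite mixL_spec. destruct (j \in L). apply Rle_refl.
  unfold Rminus. rewrite Rplus_opp_r, Rabs_R0. apply Rabs_pos.
Qed.

Lemma vupd_tends d (x : vec d) i : forall e, 0 < e -> exists dl, 0 < dl /\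
  forall h, near0 dl h -> forall j, Rabs (vupd d x i (x i + h) j - x j) < e.
Proof.
  intros e He. exists e. split. auto. intros h [_ hh].
  apply vupd_close. replace (x i + h - x i) with h by ring. auto.
  intro j. unfold Rminus. rewrite Rplus_opp_r, Rabs_R0. auto.
Qed.

Lemma const_tends d (x : vec d) : forall e, 0 < e -> exists dl, 0 < dl /\
  forall h, near0 dl h -> forall j, Rabs ((fun _ : R => x) h j - x j) < e.
Proof. intros e He. exists 1. split. lra. intros h _ j. unfold Rminus. rewrite Rplus_opp_r, Rabs_R0. auto. Qed.

Lemma cont_cx_local_bound d (g : fun3 d) t c x : cont_cx d g -> dom d t c x ->
  exists dl, 0 < dl /\ forall c' x', 0 < c' -> Rabs (c' - c) < dl ->
    (forall j, Rabs (x' j - x j) < dl) -> Rabs (g t c' x') <= Rabs (g t c x) + 1.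
Proof.
  intros H hd. destruct (H t c x hd 1 ltac:(lra)) as [dl [Hdl K]].
  exists dl. split. auto. intros c' x' h1 h2 h3. specialize (K c' x' h1 h2 h3).
  pose proof (Rabs_triang (g t c' x' - g t c x) (g t c x)) as T.
  replace (g t c' x' - g t c x + g t c x) with (g t c' x') in T by ring. lra.
Qed.

Section JointContinuity.
Variable d : nat.
Variables (g gc : fun3 d) (gx : 'I_d -> fun3 d).
Hypothesis dc_g : is_dc d g gc.
Hypothesis dx_g : forall i, is_dx d g i (gx i).
Hypothesis cont_gc : cont_cx d gc.
Hypothesis cont_gx : forall i, cont_cx d (gx i).

Lemma cont_x_mixL t c x : dom d t c x -> forall L e, 0 < e -> exists del, 0 < del /\
  forall x' : vec d, (forall j, Rabs (x' j - x j) < del) ->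
    Rabs (g t c (mixL d x x' L) - g t c x) < e.
Proof.
  intros hdom L. induction L as [|j0 L IH]; intros e He.
  - exists 1. split. lra. intros x' _. simpl. unfold Rminus. rewrite Rplus_opp_r, Rabs_R0. auto.
  - destruct (IH (e/2)) as [d1 [H1 K1]]. lra.
    destruct (cont_cx_local_bound d (gx j0) t c x (cont_gx j0) hdom) as [d0 [H0 K0]].
    set (M := Rabs (gx j0 t c x) + 1).
    assert (HM : 0 < M) by (unfold M; pose proof (Rabs_pos (gx j0 t c x)); lra).
    exists (Rmin (Rmin d1 d0) (e / (4 * M))). split.
    { apply Rmin_glb_lt. apply Rmin_glb_lt; lra. apply Rdiv_lt_0_compat; lra. }
    intros x' hx'.
    pose proof (Rmin_l (Rmin d1 d0) (e / (4 * M))). pose proof (Rmin_r (Rmin d1 d0) (e / (4 * M))).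
    pose proof (Rmin_l d1 d0). pose proof (Rmin_r d1 d0).
    set (z := mixL d x x' L). simpl. fold z.
    assert (Kz : Rabs (g t c z - g t c x) < e / 2) by (apply K1; intro j; specialize (hx' j); lra).
    assert (Cz : forall j, Rabs (z j - x j) < d0).
    { intro j. eapply Rle_lt_trans. apply mixL_close. specialize (hx' j). lra. }
    assert (Hstep : Rabs (g t c (vupd d z j0 (x' j0)) - g t c (vupd d z j0 (z j0)))
                    <= M * Rabs (x' j0 - z j0)).
    { apply (MVT_Rabs_bound (fun s => g t c (vupd d z j0 s)) (fun s => gx j0 t c (vupd d z j0 s))).
      intros s hs. split.
      - pose proof (dx_g j0 t c (vupd d z j0 s) hdom) as D. rewrite vupd_eq in D.
        eapply derivable_pt_lim_ext; [|exact D]. intro y. simpl. now rewrite vupd_vupd.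
      - destruct hdom. apply K0; auto.
        + unfold Rminus. rewrite Rplus_opp_r, Rabs_R0. lra.
        + apply vupd_close; auto. apply (between_Rabs_lt (z j0) (x' j0)); auto.
          specialize (hx' j0). lra. }
    rewrite vupd_id in Hstep.
    assert (Bd : M * Rabs (x' j0 - z j0) < e / 2).
    { assert (A1 : Rabs (x' j0 - x j0) < e / (4 * M)) by (specialize (hx' j0); lra).
      assert (A2 : Rabs (z j0 - x j0) <= Rabs (x' j0 - x j0)) by apply mixL_close.
      assert (Rabs (x' j0 - z j0) < e / (2 * M)).
      { replace (x' j0 - z j0) with ((x' j0 - x j0) - (z j0 - x j0)) by ring.
        eapply Rle_lt_trans. apply Rabs_triang. rewrite Rabs_Ropp.
        replace (e / (2 * M)) with (e / (4 * M) + e / (4 * M)) by (field; lra). lra. }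
      replace (e / 2) with (M * (e / (2 * M))) by (field; lra).
      apply Rmult_lt_compat_l; lra. }
    replace (g t c (vupd d z j0 (x' j0)) - g t c x) with
      ((g t c (vupd d z j0 (x' j0)) - g t c z) + (g t c z - g t c x)) by ring.
    eapply Rle_lt_trans. apply Rabs_triang. lra.
Qed.

Lemma cont_cx_of_partials : cont_cx d g.
Proof.
  intros t c x hdom e He.
  destruct (cont_x_mixL t c x hdom (enum 'I_d) (e/2)) as [d1 [H1 K1]]. lra.
  destruct (cont_cx_local_bound d gc t c x cont_gc hdom) as [d0 [H0 K0]].
  destruct hdom as [ht hc].
  set (M := Rabs (gc t c x) + 1).
  assert (HM : 0 < M) by (unfold M; pose proof (Rabs_pos (gc t c x)); lra).
  set (dl := Rmin (Rmin d1 d0) (Rmin (c / 2) (e / (2 * M)))).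
  assert (Hdl : 0 < dl) by (unfold dl; repeat apply Rmin_glb_lt; try lra; apply Rdiv_lt_0_compat; lra).
  exists dl. split. auto. intros c' x' hc' hcc hxx.
  assert (dl <= d1 /\ dl <= d0 /\ dl <= c / 2 /\ dl <= e / (2 * M)) as [Q1 [Q0 [Qc Qe]]].
  { unfold dl. pose proof (Rmin_l (Rmin d1 d0) (Rmin (c / 2) (e / (2 * M)))).
    pose proof (Rmin_r (Rmin d1 d0) (Rmin (c / 2) (e / (2 * M)))).
    pose proof (Rmin_l d1 d0). pose proof (Rmin_r d1 d0).
    pose proof (Rmin_l (c/2) (e / (2 * M))). pose proof (Rmin_r (c/2) (e / (2 * M))). lra. }
  assert (X1 : Rabs (g t c x' - g t c x) < e / 2).
  { rewrite <- (mixL_enum d x x'). apply K1. intro j. specialize (hxx j). lra. }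
  assert (X2 : Rabs (g t c' x' - g t c x') < e / 2).
  { eapply Rle_lt_trans.
    - apply (MVT_Rabs_bound (fun s => g t s x') (fun s => gc t s x') c c' M).
      intros s hs. pose proof (between_Rabs c c' s hs) as Hs.
      assert (Hs' : Rabs (s - c) < c / 2) by lra. apply Rabs_def2 in Hs'.
      split.
      + apply dc_g. split; auto. lra.
      + apply K0; try lra. intro j. specialize (hxx j). lra.
    - replace (e / 2) with (M * (e / (2 * M))) by (field; lra).
      apply Rmult_lt_compat_l; lra. }
  replace (g t c' x' - g t c x) with ((g t c' x' - g t c x') + (g t c x' - g t c x)) by ring.
  eapply Rle_lt_trans. apply Rabs_triang. lra.
Qed.

End JointContinuity.

Record U2_data {d} (u uc ucc : fun3 d) (ucx : 'I_d -> fun3 d) : Prop := {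
  dc_u : is_dc d u uc;
  dc_uc : is_dc d uc ucc;
  dx_uc : forall i, is_dx d uc i (ucx i);
  cont_ucc : cont_cx d ucc;
  cont_ucx : forall i, cont_cx d (ucx i);
  ucc_neg : forall t c x, dom d t c x -> ucc t c x < 0;
  ratio_bound : exists N, 0 < N /\ forall t c x i, dom d t c x ->
    - c * ucc t c x / uc t c x + Rabs (ucx i t c x) / uc t c x <= N }.

Arguments dc_u {d u uc ucc ucx}.
Arguments dc_uc {d u uc ucc ucx}.
Arguments dx_uc {d u uc ucc ucx}.
Arguments cont_ucc {d u uc ucc ucx}.
Arguments cont_ucx {d u uc ucc ucx}.
Arguments ucc_neg {d u uc ucc ucx}.
Arguments ratio_bound {d u uc ucc ucx}.

Lemma U2E d (u : fun3 d) : U2 d u <-> U1 d u /\ exists uc ucc ucx, U2_data u uc ucc ucx.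
Proof.
  split; intros [HU [uc [ucc [ucx H]]]]; split; auto; exists uc, ucc, ucx.
  - destruct H as (h1 & h2 & h3 & h4 & h5 & h6 & h7). now constructor.
  - destruct H. repeat split; auto.
Qed.

Section U1Facts.
Variables (d : nat) (u : fun3 d).
Hypothesis HU : U1 d u.

Lemma U1_inada t x : 0 <= t <= 1 -> Inada (fun c => u t c x).
Proof. intros ht. destruct HU as [_ [H _]]. auto. Qed.

Lemma U1_increasing t x a b : 0 <= t <= 1 -> 0 < a -> a < b -> u t a x < u t b x.
Proof. intros ht. destruct (U1_inada t x ht) as [_ [H _]]. auto. Qed.

Lemma U1_strictly_concave t x a b l : 0 <= t <= 1 -> 0 < a -> 0 < b -> a <> b -> 0 < l < 1 ->
  l * u t a x + (1 - l) * u t b x < u t (l * a + (1 - l) * b) x.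
Proof. intros ht. destruct (U1_inada t x ht) as [H _]. apply H. Qed.

Lemma U1_concave t x a b l : 0 <= t <= 1 -> 0 < a -> 0 < b -> 0 < l < 1 ->
  l * u t a x + (1 - l) * u t b x <= u t (l * a + (1 - l) * b) x.
Proof.
  intros ht ha hb hl. destruct (Req_dec a b) as [<-|E].
  - replace (l * a + (1 - l) * a) with a by ring. lra.
  - left. apply U1_strictly_concave; auto.
Qed.

Lemma U1_cont_c t x c : 0 <= t <= 1 -> 0 < c ->
  forall e, 0 < e -> exists dl, 0 < dl /\ forall y, Rabs (y - c) < dl -> Rabs (u t y x - u t c x) < e.
Proof.
  intros ht hc. destruct (U1_inada t x ht) as [_ [_ [g' [Hd _]]]].
  apply (derivable_pt_lim_cont (fun c => u t c x) c (g' c)). apply Hd. auto.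
Qed.

(* via [exp y / 2 = exp (y - ln 2)] and [0 < ln 2 < 1] *)
Lemma U1_growth_half : exists N, 0 < N /\ forall t x y, 0 <= t <= 1 ->
  Rabs (u t (exp y) x) <= exp (N * (1 + vnorm d x + Rabs y)) /\
  Rabs (u t (exp y / 2) x) <= exp (N * (1 + vnorm d x + Rabs y)).
Proof.
  destruct HU as [_ [_ [N [HN K]]]]. exists (2 * N). split. lra. intros t x y ht.
  set (L := 1 + vnorm d x + Rabs y).
  assert (HL : 1 <= L) by (unfold L; pose proof (vnorm_nonneg d x); pose proof (Rabs_pos y); lra).
  assert (l0 : 0 < ln 2) by (pose proof ln_lt_2; lra).
  assert (l1 : ln 2 < 1).
  { rewrite <- (ln_exp 1). apply ln_increasing. lra. pose proof (exp_ineq1 1 ltac:(lra)). lra. }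
  assert (Ey : exp (y - ln 2) = exp y / 2).
  { unfold Rminus. rewrite exp_plus, exp_Ropp, exp_ln by lra. field. }
  split.
  - eapply Rle_trans. apply K; auto. apply exp_le. fold L. nra.
  - rewrite <- Ey. eapply Rle_trans. apply K; auto. apply exp_le.
    pose proof (Rabs_triang y (- ln 2)) as T. rewrite Rabs_Ropp, (Rabs_right (ln 2)) in T by lra.
    fold L. replace (2 * N * L) with (N * (2 * L)) by ring. apply Rmult_le_compat_l. lra.
    unfold L, Rminus. pose proof (vnorm_nonneg d x). pose proof (Rabs_pos y). lra.
Qed.

End U1Facts.

Section MarginalUtility.
Variable d : nat.
Variables (u uc ucc : fun3 d) (ucx : 'I_d -> fun3 d).
Hypothesis HU : U1 d u.
Hypothesis HD : U2_data u uc ucc ucx.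

Lemma uc_cont : cont_cx d uc.
Proof.
  apply (cont_cx_of_partials d uc ucc ucx).
  apply (dc_uc HD). apply (dx_uc HD). apply (cont_ucc HD). apply (cont_ucx HD).
Qed.

Lemma uc_decreasing t x a b : 0 <= t <= 1 -> 0 < a -> a < b -> uc t b x < uc t a x.
Proof.
  intros ht ha hab. apply (neg_derivative_decreasing (fun c => uc t c x) (fun c => ucc t c x)); auto.
  - intros s hs. apply (dc_uc HD). split; auto; lra.
  - intros s hs. apply (ucc_neg HD). split; auto; lra.
Qed.

Lemma uc_nonincreasing t x a b : 0 <= t <= 1 -> 0 < a -> a <= b -> uc t b x <= uc t a x.
Proof.
  intros ht ha hab. destruct (Req_dec a b) as [<-|E]. lra.
  left. apply uc_decreasing; auto. lra.
Qed.

Lemma uc_pos t c x : dom d t c x -> 0 < uc t c x.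
Proof.
  intros [ht hc].
  assert (0 <= uc t (c + 1) x).
  { apply (increasing_derivative_ge0 (fun c => u t c x) (c + 1)). lra.
    intros a b ha hab. apply (U1_increasing d u HU); auto. apply (dc_u HD). split; auto; lra. }
  assert (uc t (c + 1) x < uc t c x) by (apply uc_decreasing; auto; lra). lra.
Qed.

Lemma dx_uc_tends i t c x : dom d t c x ->
  tends R near0 (fun h => (uc t c (vupd d x i (x i + h)) - uc t c x) / h) (ucx i t c x).
Proof.
  intros hd. assert (Dx := dx_uc HD i t c x hd). apply derivable_pt_lim_tends in Dx.
  rewrite vupd_id in Dx. exact Dx.
Qed.

Lemma inada_derivative_eq t x g' c : 0 <= t <= 1 -> 0 < c ->
  (forall c, 0 < c -> derivable_pt_lim (fun c => u t c x) c (g' c)) -> g' c = uc t c x.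
Proof.
  intros ht hc Hd. apply (uniqueness_limite (fun c => u t c x) c). apply Hd; auto.
  apply (dc_u HD). split; auto.
Qed.

Lemma uc_large_near0 t x : 0 <= t <= 1 -> forall M, exists e, 0 < e /\
  forall c, 0 < c < e -> M < uc t c x.
Proof.
  intros ht M. destruct (U1_inada d u HU t x ht) as [_ [_ [g' [Hd [_ [H _]]]]]].
  destruct (H M) as [e [He K]]. exists e. split. auto. intros c hc.
  rewrite <- (inada_derivative_eq t x g' c); auto. lra.
Qed.

Lemma uc_small_near_infty t x : 0 <= t <= 1 -> forall e, 0 < e -> exists M,
  forall c, 0 < c -> M < c -> uc t c x < e.
Proof.
  intros ht e He. destruct (U1_inada d u HU t x ht) as [_ [_ [g' [Hd [_ [_ H]]]]]].
  destruct (H e He) as [M K]. exists M. intros c hc hM.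
  rewrite <- (inada_derivative_eq t x g' c); auto. specialize (K c hM). apply Rabs_def2 in K. lra.
Qed.

End MarginalUtility.

Section OptimalSplit.
Variable d : nat.
Variables (u1 u1c u1cc : fun3 d) (u1cx : 'I_d -> fun3 d).
Variables (u2 u2c u2cc : fun3 d) (u2cx : 'I_d -> fun3 d).
Hypothesis HU1 : U1 d u1.
Hypothesis HD1 : U2_data u1 u1c u1cc u1cx.
Hypothesis HU2 : U1 d u2.
Hypothesis HD2 : U2_data u2 u2c u2cc u2cx.

(* the first-order condition for the split [c = y + (c - y)] reads [marginal_gap t c x y = 0] *)
Definition marginal_gap t c x y := u2c t (c - y) x - u1c t y x.

Lemma marginal_gap_increasing t c x y1 y2 : dom d t c x -> 0 < y1 -> y1 < y2 -> y2 < c ->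
  marginal_gap t c x y1 < marginal_gap t c x y2.
Proof.
  intros [ht hc] h1 h12 h2. unfold marginal_gap.
  assert (u1c t y2 x < u1c t y1 x) by (apply (uc_decreasing d u1 u1c u1cc u1cx HD1); auto).
  assert (u2c t (c - y1) x < u2c t (c - y2) x) by (apply (uc_decreasing d u2 u2c u2cc u2cx HD2); auto; lra).
  lra.
Qed.

Lemma marginal_gap_continuity_pt t c x y : dom d t c x -> 0 < y < c ->
  continuity_pt (marginal_gap t c x) y.
Proof.
  intros [ht hc] hy.
  assert (C1 : continuity_pt (fun z => u1c t z x) y).
  { apply derivable_continuous_pt. exists (u1cc t y x). apply (dc_uc HD1). split; auto; lra. }
  assert (C2 : continuity_pt (fun z => u2c t z x) (c - y)).
  { apply derivable_continuous_pt. exists (u2cc t (c - y) x). apply (dc_uc HD2). split; auto; lra. }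
  assert (C3 : continuity_pt (fun z => c - z) y) by reg.
  exact (continuity_pt_minus _ _ y (continuity_pt_comp _ _ y C3 C2) C1).
Qed.

Lemma optimal_split_exists t c x : dom d t c x ->
  exists y, 0 < y < c /\ u1c t y x = u2c t (c - y) x.
Proof.
  intros hd. pose proof hd as [ht hc].
  destruct (uc_large_near0 d u1 u1c u1cc u1cx HU1 HD1 t x ht (u2c t (c / 2) x)) as [e1 [He1 K1]].
  destruct (uc_large_near0 d u2 u2c u2cc u2cx HU2 HD2 t x ht (u1c t (c / 2) x)) as [e2 [He2 K2]].
  set (a := Rmin e1 c / 2). set (b := c - Rmin e2 c / 2).
  assert (0 < Rmin e1 c <= e1 /\ Rmin e1 c <= c) as [[Ha1 Ha2] Ha3].
  { repeat split. apply Rmin_glb_lt; lra. apply Rmin_l. apply Rmin_r. }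
  assert (0 < Rmin e2 c <= e2 /\ Rmin e2 c <= c) as [[Hb1 Hb2] Hb3].
  { repeat split. apply Rmin_glb_lt; lra. apply Rmin_l. apply Rmin_r. }
  assert (ga : marginal_gap t c x a < 0).
  { unfold marginal_gap. assert (u2c t (c / 2) x < u1c t a x) by (apply K1; unfold a; lra).
    assert (u2c t (c - a) x <= u2c t (c / 2) x)
      by (apply (uc_nonincreasing d u2 u2c u2cc u2cx HD2); auto; unfold a; lra).
    lra. }
  assert (gb : 0 < marginal_gap t c x b).
  { unfold marginal_gap. assert (u1c t (c / 2) x < u2c t (c - b) x) by (apply K2; unfold b; lra).
    assert (u1c t b x <= u1c t (c / 2) x)
      by (apply (uc_nonincreasing d u1 u1c u1cc u1cx HD1); auto; unfold b; lra).
    lra. }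
  assert (hab : a < b).
  { destruct (Rtotal_order a b) as [|[E|E]]; auto. rewrite E in ga. lra. unfold a, b in E. lra. }
  destruct (Ranalysis5.IVT_interv (marginal_gap t c x) a b) as [z [hz E]]; auto.
  { intros z hz. apply marginal_gap_continuity_pt; auto. unfold a, b in hz. lra. }
  exists z. unfold a, b in hz. split. lra. unfold marginal_gap in E. lra.
Qed.

End OptimalSplit.


Definition near_cx {d} c (x : vec d) (dl : R) (p : R * vec d) :=
  0 < fst p /\ Rabs (fst p - c) < dl /\ forall j, Rabs (snd p j - x j) < dl.

Lemma near_cx_mono d c (x : vec d) d1 d2 p : 0 < d1 -> d1 <= d2 -> near_cx c x d1 p -> near_cx c x d2 p.
Proof. unfold near_cx. intros h1 h2 [a [b e]]. split; auto. split. lra. intro j. specialize (e j). lra. Qed.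

Lemma cont_cx_tends d (g : fun3 d) :
  cont_cx d g <-> forall t c x, dom d t c x ->
    tends (R * vec d) (near_cx c x) (fun p => g t (fst p) (snd p)) (g t c x).
Proof.
  split.
  - intros H t c x hd e He. destruct (H t c x hd e He) as [dl [Hdl K]]. exists dl. split. auto.
    intros [c' x'] [h1 [h2 h3]]. simpl in *. apply K; auto.
  - intros H t c x hd e He. destruct (H t c x hd e He) as [dl [Hdl K]]. exists dl. split. auto.
    intros c' x' h1 h2 h3. apply (K (c', x')). unfold near_cx. simpl. auto.
Qed.

Lemma tends_fst_near_cx d c (x : vec d) : tends (R * vec d) (near_cx c x) (fun p => fst p) c.
Proof. intros e He. exists e. split. auto. intros p [_ [h _]]. auto. Qed.

Lemma cont_cx_comp d (g phi : fun3 d) : cont_cx d g -> cont_cx d phi ->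
  (forall t c x, dom d t c x -> 0 < phi t c x) ->
  cont_cx d (fun t c x => g t (phi t c x) x).
Proof.
  intros Hg Hp Hpos t c x hd e He. pose proof hd as [ht hc].
  destruct (Hg t (phi t c x) x ltac:(split; auto) e He) as [d1 [Hd1 K1]].
  destruct (Hp t c x hd d1 Hd1) as [d2 [Hd2 K2]].
  exists (Rmin d1 d2). split. apply Rmin_glb_lt; lra.
  intros c' x' h1 h2 h3. pose proof (Rmin_l d1 d2). pose proof (Rmin_r d1 d2).
  apply K1. apply Hpos. split; auto. apply K2; auto. lra. intro j. specialize (h3 j). lra.
  intro j. specialize (h3 j). lra.
Qed.

Lemma cont_cx_continuity_pt d (g : fun3 d) t c x : cont_cx d g -> dom d t c x ->
  continuity_pt (fun c' => g t c' x) c.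
Proof.
  intros H hd e He. pose proof hd as [_ hc]. destruct (H t c x hd e He) as [dl [Hdl K]].
  exists (Rmin dl c). split. apply Rmin_glb_lt; lra.
  intros z [_ hz]. pose proof (Rmin_l dl c). pose proof (Rmin_r dl c). simpl in hz |- *.
  unfold R_dist in hz |- *. apply K.
  - apply Rabs_def2 in hz. lra.
  - lra.
  - intro j. unfold Rminus. rewrite Rplus_opp_r, Rabs_R0. auto.
Qed.

Lemma cont_cx_mult d (g h : fun3 d) : cont_cx d g -> cont_cx d h -> cont_cx d (fun t c x => g t c x * h t c x).
Proof.
  intros Hg Hh. apply cont_cx_tends. intros t c x hd.
  apply tends_mult. intros; eapply near_cx_mono; eauto.
  apply (proj1 (cont_cx_tends d g) Hg); auto. apply (proj1 (cont_cx_tends d h) Hh); auto.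
Qed.

Lemma cont_cx_plus d (g h : fun3 d) : cont_cx d g -> cont_cx d h -> cont_cx d (fun t c x => g t c x + h t c x).
Proof.
  intros Hg Hh. apply cont_cx_tends. intros t c x hd.
  apply tends_plus. intros; eapply near_cx_mono; eauto.
  apply (proj1 (cont_cx_tends d g) Hg); auto. apply (proj1 (cont_cx_tends d h) Hh); auto.
Qed.

(* difference quotient of [g] in [c] over the step [k], with the junk value [a] at [k = 0] *)
Definition dquot {d} (g : fun3 d) t y0 (X : vec d) k a :=
  if Req_EM_T k 0 then a else (g t (y0 + k) X - g t y0 X) / k.

Lemma dquot_mul d (g : fun3 d) t y0 X k a : dquot g t y0 X k a * k = g t (y0 + k) X - g t y0 X.
Proof.
  unfold dquot. destruct (Req_EM_T k 0) as [E|E].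
  - subst. rewrite Rplus_0_r. ring.
  - field. auto.
Qed.

(* Along steps [K h -> 0] and base points [Xh h -> x], the quotients of [g] tend to [gc]:
   by the mean value theorem they are values of the continuous [gc] at nearby points. *)
Lemma dquot_tends d (g gc : fun3 d) t y0 x (K : R -> R) (Xh : R -> vec d) :
  is_dc d g gc -> cont_cx d gc -> dom d t y0 x -> tends R near0 K 0 ->
  (forall e, 0 < e -> exists dl, 0 < dl /\ forall h, near0 dl h -> forall j, Rabs (Xh h j - x j) < e) ->
  tends R near0 (fun h => dquot g t y0 (Xh h) (K h) (gc t y0 x)) (gc t y0 x).
Proof.
  intros Hd Hc hd HK HX e He. pose proof hd as [ht hy].
  destruct (Hc t y0 x hd e He) as [d0 [Hd0 K0]].
  set (rho := Rmin d0 (y0 / 2)).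
  assert (Hrho : 0 < rho) by (apply Rmin_glb_lt; lra).
  assert (rho <= d0) by apply Rmin_l. assert (rho <= y0/2) by apply Rmin_r.
  destruct (HK rho Hrho) as [d1 [Hd1 K1]].
  destruct (HX d0 Hd0) as [d2 [Hd2 K2]].
  exists (Rmin d1 d2). split. apply Rmin_glb_lt; lra.
  intros h hh. destruct (N_Rmin R near0 near0_mono _ _ _ Hd1 Hd2 hh) as [h1 h2].
  specialize (K1 h h1). specialize (K2 h h2). rewrite Rminus_0_r in K1.
  unfold dquot. destruct (Req_EM_T (K h) 0) as [E|E].
  - unfold Rminus. rewrite Rplus_opp_r, Rabs_R0. auto.
  - destruct (MVT_between (fun s => g t s (Xh h)) (fun s => gc t s (Xh h)) y0 (y0 + K h)) as [xi [Hxi Exi]].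
    { intros s hs. apply Hd. split. auto.
      apply between_Rabs in hs. replace (y0 + K h - y0) with (K h) in hs by ring.
      assert (Q : Rabs (s - y0) < y0 / 2) by lra. apply Rabs_def2 in Q. lra. }
    cbv beta in Exi. replace (y0 + K h - y0) with (K h) in Exi by ring.
    replace ((g t (y0 + K h) (Xh h) - g t y0 (Xh h)) / K h) with (gc t xi (Xh h)) by (rewrite Exi; field; auto).
    apply between_Rabs in Hxi. replace (y0 + K h - y0) with (K h) in Hxi by ring.
    assert (Q2 : Rabs (xi - y0) < y0 / 2) by lra. apply Rabs_def2 in Q2.
    apply K0; auto; lra.
Qed.

(* Differentiating an implicit relation [A1 D + B1 h = - A2 D + B2 h]: solving for [D] gives
   the limit of the common value divided by [h]. *)
Lemma implicit_quotient_tends (A1 A2 B1 B2 D : R -> R) a1 a2 b1 b2 r :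
  tends R near0 A1 a1 -> tends R near0 A2 a2 -> tends R near0 B1 b1 -> tends R near0 B2 b2 ->
  a1 + a2 <> 0 -> 0 < r ->
  (forall h, near0 r h -> A1 h * D h + B1 h * h = - A2 h * D h + B2 h * h) ->
  tends R near0 (fun h => (A1 h * D h + B1 h * h) / h) ((a1 * b2 + a2 * b1) / (a1 + a2)).
Proof.
  intros c1 c2 c3 c4 ha hr Eq.
  assert (cS : tends R near0 (fun h => A1 h + A2 h) (a1 + a2)) by (apply tends_plus; auto; exact near0_mono).
  assert (Pa : 0 < Rabs (a1 + a2)) by (apply Rabs_pos_lt; auto).
  destruct (cS (Rabs (a1 + a2) / 2)) as [r' [Hr' K']]. lra.
  assert (cE : tends R near0 (fun h => A1 h * ((B2 h - B1 h) / (A1 h + A2 h)) + B1 h)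
                 (a1 * ((b2 - b1) / (a1 + a2)) + b1)).
  { apply tends_plus; [exact near0_mono| |auto]. apply tends_mult; [exact near0_mono|auto|].
    apply tends_div; [exact near0_mono| |auto|auto]. apply tends_minus; auto. exact near0_mono. }
  replace ((a1 * b2 + a2 * b1) / (a1 + a2)) with (a1 * ((b2 - b1) / (a1 + a2)) + b1) by (field; auto).
  apply (tends_eventually_ext R near0 near0_mono
           (fun h => A1 h * ((B2 h - B1 h) / (A1 h + A2 h)) + B1 h) _ _ (Rmin r r')).
  - apply Rmin_glb_lt; lra.
  - intros h hh. destruct (N_Rmin R near0 near0_mono _ _ _ hr Hr' hh) as [h1 h2].
    specialize (K' h h2). specialize (Eq h h1).
    assert (nz : A1 h + A2 h <> 0).
    { intro Z. rewrite Z in K'. rewrite Rminus_0_l, Rabs_Ropp in K'. lra. }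
    destruct h1 as [hz _].
    assert (Dh : D h = (B2 h - B1 h) * h / (A1 h + A2 h)) by (field_simplify_eq; auto; lra).
    rewrite Dh. field. split; auto.
  - exact cE.
Qed.

Lemma weighted_mean_le a b P Q : a < 0 -> b < 0 -> (- b * P + - a * Q) / - (a + b) <= Rmax P Q.
Proof.
  intros ha hb. pose proof (Rmax_l P Q). pose proof (Rmax_r P Q).
  apply (Rmult_le_reg_r (- (a + b))). lra.
  replace ((- b * P + - a * Q) / - (a + b) * - (a + b)) with (- b * P + - a * Q) by (field; lra).
  nra.
Qed.

(* The ratio bound for the sup-convolution: [-c ab/(a+b)] and [|aq+bp|/|a+b|] are at most the
   same weighted mean of the corresponding quantities of [u1] at [f0] and [u2] at [c - f0]. *)
Lemma harmonic_ratio_bound c f0 a b v p q N1 N2 : 0 < f0 < c -> a < 0 -> b < 0 -> 0 < v ->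
  - f0 * a / v + Rabs p / v <= N1 -> - (c - f0) * b / v + Rabs q / v <= N2 ->
  - c * (a * b / (a + b)) / v + Rabs ((a * q + b * p) / (a + b)) / v <= N1 + N2.
Proof.
  intros hf ha hb hv h1 h2.
  set (P := (- f0 * a + Rabs p) / v). set (Q := (- (c - f0) * b + Rabs q) / v).
  assert (HP : P <= N1) by (unfold P; replace ((- f0 * a + Rabs p) / v) with (- f0 * a / v + Rabs p / v) by (field; lra); lra).
  assert (HQ : Q <= N2) by (unfold Q; replace ((- (c - f0) * b + Rabs q) / v) with (- (c - f0) * b / v + Rabs q / v) by (field; lra); lra).
  assert (Habs : Rabs ((a * q + b * p) / (a + b)) <= (- a * Rabs q + - b * Rabs p) / - (a + b)).
  { unfold Rdiv. rewrite Rabs_mult, Rabs_inv, (Rabs_left (a + b)) by lra.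
    apply Rmult_le_compat_r. apply Rlt_le, Rinv_0_lt_compat. lra.
    eapply Rle_trans. apply Rabs_triang. rewrite !Rabs_mult, (Rabs_left a), (Rabs_left b) by lra. lra. }
  assert (Hnum : - c * (a * b / (a + b)) + Rabs ((a * q + b * p) / (a + b))
                 <= (- b * (P * v) + - a * (Q * v)) / - (a + b)).
  { replace (P * v) with (- f0 * a + Rabs p) by (unfold P; field; lra).
    replace (Q * v) with (- (c - f0) * b + Rabs q) by (unfold Q; field; lra).
    replace (- c * (a * b / (a + b))) with ((- b * (- f0 * a) + - a * (- (c - f0) * b)) / - (a + b))
      by (field; lra).
    replace ((- b * (- f0 * a + Rabs p) + - a * (- (c - f0) * b + Rabs q)) / - (a + b)) with
      ((- b * (- f0 * a) + - a * (- (c - f0) * b)) / - (a + b) + (- a * Rabs q + - b * Rabs p) / - (a + b))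
      by (field; lra).
    lra. }
  assert (Hsum : - c * (a * b / (a + b)) / v + Rabs ((a * q + b * p) / (a + b)) / v
                 <= (- b * P + - a * Q) / - (a + b)).
  { replace ((- b * P + - a * Q) / - (a + b)) with ((- b * (P * v) + - a * (Q * v)) / - (a + b) / v)
      by (field; lra).
    replace (- c * (a * b / (a + b)) / v + Rabs ((a * q + b * p) / (a + b)) / v) with
      ((- c * (a * b / (a + b)) + Rabs ((a * q + b * p) / (a + b))) / v) by (field; lra).
    apply Rmult_le_compat_r. apply Rlt_le, Rinv_0_lt_compat. lra. exact Hnum. }
  eapply Rle_trans. exact Hsum. eapply Rle_trans. apply weighted_mean_le; auto.
  assert (0 <= P). { unfold P. apply Rmult_le_pos; [|apply Rlt_le, Rinv_0_lt_compat; lra]. pose proof (Rabs_pos p). nra. }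
  assert (0 <= Q). { unfold Q. apply Rmult_le_pos; [|apply Rlt_le, Rinv_0_lt_compat; lra]. pose proof (Rabs_pos q). nra. }
  unfold Rmax. destruct (Rle_dec P Q); lra.
Qed.


(* a countable family of reals, dense in R *)
Definition Qn (k m n : nat) : R := (INR k - INR m) / INR (S n).

Lemma IZR_nat_diff z : IZR z = INR (Z.to_nat z) - INR (Z.to_nat (- z)).
Proof.
  destruct (Z_le_gt_dec 0 z).
  - assert (E : Z.to_nat (- z) = 0%nat) by lia. rewrite E, INR_0, INR_IZR_INZ, Z2Nat.id by lia. ring.
  - assert (E : Z.to_nat z = 0%nat) by lia. rewrite E, INR_0, INR_IZR_INZ, Z2Nat.id by lia.
    rewrite opp_IZR. ring.
Qed.

Lemma Qn_dense a b : a < b -> exists k m n, a < Qn k m n < b.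
Proof.
  intros hab. destruct (archimed_cor1 (b - a)) as [N [HN1 HN2]]. lra.
  destruct N as [|n]. lia.
  assert (HP : 0 < INR (S n)) by (apply lt_0_INR; lia).
  set (w := a * INR (S n)). destruct (archimed w) as [A1 A2].
  exists (Z.to_nat (up w)), (Z.to_nat (- up w)), n. unfold Qn. rewrite <- IZR_nat_diff.
  assert (1 < (b - a) * INR (S n)).
  { replace 1 with (/ INR (S n) * INR (S n)) by (field; lra). apply Rmult_lt_compat_r; auto. }
  split; apply (Rmult_lt_reg_r (INR (S n))); auto; unfold Rdiv;
    rewrite Rmult_assoc, Rinv_l, Rmult_1_r by lra; unfold w in *; lra.
Qed.

Lemma is_lub_approx (P : R -> Prop) l a : is_lub P l -> a < l -> exists v, P v /\ a < v.
Proof.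
  intros [_ Hl] ha. apply NNPP. intro K.
  assert (l <= a); [|lra].
  apply Hl. intros v hv. apply Rnot_lt_le. intro L. apply K. exists v. auto.
Qed.

Section Borel.
Variable d : nat.

Definition in_dom (p : Pt d) : Prop := dom d (fst (fst p)) (snd (fst p)) (snd p).

Lemma borel_open O : open_Pt d O -> borel d O.
Proof. intros H F _ HO. apply HO. auto. Qed.

Lemma borel_compl A : borel d A -> borel d (fun p => ~ A p).
Proof. intros H F HF HO. pose proof HF as [_ [Hc _]]. apply Hc. apply H; auto. Qed.

Lemma borel_union (A : nat -> Pt d -> Prop) :
  (forall n, borel d (A n)) -> borel d (fun p => exists n, A n p).
Proof. intros H F HF HO. pose proof HF as [_ [_ Hu]]. apply Hu. intro n. apply H; auto. Qed.

Lemma borel_ext A B : (forall p, A p <-> B p) -> borel d A -> borel d B.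
Proof.
  intros H HA. replace B with A; auto. apply functional_extensionality. intro p.
  apply propositional_extensionality. auto.
Qed.

Lemma borel_False : borel d (fun _ => False).
Proof.
  apply (borel_ext (fun p => ~ True)). intuition.
  apply borel_compl. intros F [H _] _. exact H.
Qed.

Lemma borel_inter A B : borel d A -> borel d B -> borel d (fun p => A p /\ B p).
Proof.
  intros HA HB.
  set (C := fun (n : nat) (p : Pt d) => match n with O => ~ A p | _ => ~ B p end).
  apply (borel_ext (fun p => ~ exists n, C n p)).
  - intro p. split.
    + intro H. split; apply NNPP; intro K; apply H; [exists O | exists 1%nat]; exact K.
    + intros [a b] [n H]. destruct n; simpl in H; auto.
  - apply borel_compl. apply borel_union. intro n. destruct n; apply borel_compl; auto.
Qed.

Lemma borel_and_const (P : Prop) A : (P -> borel d A) -> borel d (fun p => P /\ A p).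
Proof.
  intros H. destruct (classic P) as [hp|hp].
  - apply (borel_ext A). intuition. auto.
  - apply (borel_ext (fun _ => False)). intuition. apply borel_False.
Qed.

Lemma borel_preimage (phi : Pt d -> Pt d) A :
  (forall O, open_Pt d O -> open_Pt d (fun p => O (phi p))) ->
  borel d A -> borel d (fun p => A (phi p)).
Proof.
  intros Hphi HA F HF HO.
  change ((fun B : Pt d -> Prop => F (fun p => B (phi p))) A). apply HA.
  - destruct HF as [H1 [H2 H3]]. split; [exact H1|split].
    + intros B hB. apply H2. exact hB.
    + intros An hA. apply (H3 (fun n p => An n (phi p))). exact hA.
  - intros O hO. apply HO. apply Hphi. auto.
Qed.

Lemma borel_in_dom : borel d in_dom.
Proof.
  apply (borel_ext (fun p => (~ (fst (fst p) < 0) /\ ~ (1 < fst (fst p))) /\ 0 < snd (fst p))).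
  { intro p. unfold in_dom, dom. lra. }
  apply borel_inter; [apply borel_inter|]; try apply borel_compl; apply borel_open.
  - intros p hp. exists (- fst (fst p)). split. lra. intros q [h _]. apply Rabs_def2 in h. lra.
  - intros p hp. exists (fst (fst p) - 1). split. lra. intros q [h _]. apply Rabs_def2 in h. lra.
  - intros p hp. exists (snd (fst p)). split. lra. intros q [_ [h _]]. apply Rabs_def2 in h. lra.
Qed.

Definition superlevel (G : Pt d -> R) a := fun p => in_dom p /\ a < G p.

Definition uncurry3 (g : fun3 d) (p : Pt d) : R := g (fst (fst p)) (snd (fst p)) (snd p).

(* Measurability through the superlevel sets: an open [V] is the countable union of the
   intervals with endpoints in [Qn] that it contains. *)
Lemma measurable3_of_superlevel (g : fun3 d) :
  (forall a, borel d (superlevel (uncurry3 g) a)) -> measurable3 d g.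
Proof.
  intros H V HV. set (G := uncurry3 g) in H. change (borel d (fun p => in_dom p /\ V (G p))).
  assert (Hsub : forall b, borel d (fun p => in_dom p /\ G p < b)).
  { intro b. apply (borel_ext (fun p => in_dom p /\ exists n, ~ superlevel G (b - / INR (S n)) p)).
    - intro p. split.
      + intros [hd [n hn]]. split; auto. apply NNPP. intro K. apply hn. split; auto.
        assert (0 < / INR (S n)) by (apply Rinv_0_lt_compat, lt_0_INR; lia). lra.
      + intros [hd hb]. split; auto. destruct (archimed_cor1 (b - G p)) as [N [HN1 HN2]]. lra.
        destruct N as [|n]. lia. exists n. intros [_ K]. lra.
    - apply borel_inter. apply borel_in_dom. apply borel_union. intro n. apply borel_compl. apply H. }
  apply (borel_ext (fun p => exists k1 m1 n1 k2 m2 n2,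
     (forall z, Qn k1 m1 n1 < z < Qn k2 m2 n2 -> V z) /\
     (superlevel G (Qn k1 m1 n1) p /\ (in_dom p /\ G p < Qn k2 m2 n2)))).
  - intro p. split.
    + intros (k1 & m1 & n1 & k2 & m2 & n2 & HI & [hd h1] & _ & h2). split. exact hd. apply HI. lra.
    + intros [hd hv]. destruct (HV (G p) hv) as [e [He K]].
      destruct (Qn_dense (G p - e) (G p)) as [k1 [m1 [n1 Q1]]]. lra.
      destruct (Qn_dense (G p) (G p + e)) as [k2 [m2 [n2 Q2]]]. lra.
      exists k1, m1, n1, k2, m2, n2. split.
      * intros z hz. apply K. apply Rabs_def1; lra.
      * split; split; auto; lra.
  - do 6 (apply borel_union; intro). apply borel_and_const. intros _.
    apply borel_inter. apply H. apply Hsub.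
Qed.

Lemma superlevel_of_measurable3 (g : fun3 d) : measurable3 d g ->
  forall a, borel d (superlevel (uncurry3 g) a).
Proof.
  intros H a. apply (H (fun z => a < z)).
  intros y hy. exists (y - a). split. lra. intros z hz. apply Rabs_def2 in hz. lra.
Qed.

Lemma superlevel_plus (G H : Pt d -> R) :
  (forall a, borel d (superlevel G a)) -> (forall a, borel d (superlevel H a)) ->
  forall a, borel d (superlevel (fun p => G p + H p) a).
Proof.
  intros HG HH a.
  apply (borel_ext (fun p => exists k m n, superlevel G (Qn k m n) p /\ superlevel H (a - Qn k m n) p)).
  - intro p. split.
    + intros [k [m [n [[hd h1] [_ h2]]]]]. split; auto. lra.
    + intros [hd h]. destruct (Qn_dense (a - H p) (G p)) as [k [m [n Q]]]. lra.
      exists k, m, n. split; split; auto; lra.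
  - do 3 (apply borel_union; intro). apply borel_inter; auto.
Qed.

Lemma superlevel_scale_c (g : fun3 d) s : measurable3 d g -> 0 < s <= 1 ->
  forall a, borel d (superlevel (fun p => g (fst (fst p)) (s * snd (fst p)) (snd p)) a).
Proof.
  intros Hg hs a.
  set (phi := fun p : Pt d => (fst (fst p), s * snd (fst p), snd p)).
  apply (borel_ext (fun p => in_dom p /\ superlevel (uncurry3 g) a (phi p))).
  - intro p. unfold superlevel, uncurry3, phi, in_dom, dom. simpl. split.
    + intros [h1 [h2 h3]]. auto.
    + intros [[h1 h2] h3]. repeat split; auto; try lra. apply Rmult_lt_0_compat; lra.
  - apply borel_inter. apply borel_in_dom.
    apply (borel_preimage phi). 2: apply superlevel_of_measurable3; auto.
    intros O HO p hp. destruct (HO (phi p) hp) as [e [He K]]. exists e. split. auto.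
    intros q [h1 [h2 h3]]. apply K. unfold phi, close. simpl. split; auto. split; auto.
    replace (s * snd (fst p) - s * snd (fst q)) with (s * (snd (fst p) - snd (fst q))) by ring.
    rewrite Rabs_mult, Rabs_right by lra.
    apply Rle_lt_trans with (1 * Rabs (snd (fst p) - snd (fst q))).
    apply Rmult_le_compat_r. apply Rabs_pos. lra. lra.
Qed.

End Borel.

Section SupconvMeasurable.
Variable d : nat.
Variables (u1 u2 u : fun3 d).
Hypothesis HU1 : U1 d u1.
Hypothesis HU2 : U1 d u2.
Hypothesis HS : is_supconv d u1 u2 u.

Lemma supconv_gt_rational_split t c x a : dom d t c x ->
  a < u t c x <-> exists k m n, 0 < Qn k m n < 1 /\
    a < u1 t (Qn k m n * c) x + u2 t ((1 - Qn k m n) * c) x.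
Proof.
  intros hd. pose proof hd as [ht hc]. split.
  - intros ha. destruct (is_lub_approx _ _ _ (HS t c x hd) ha) as [v [[c1 [hc1 ->]] hv]].
    set (eps := u1 t c1 x + u2 t (c - c1) x - a).
    destruct (U1_cont_c d u1 HU1 t x c1 ht ltac:(lra) (eps/2)) as [d1 [Hd1 K1]]. unfold eps; lra.
    destruct (U1_cont_c d u2 HU2 t x (c - c1) ht ltac:(lra) (eps/2)) as [d2 [Hd2 K2]]. unfold eps; lra.
    set (eta := Rmin (Rmin d1 d2) c1).
    assert (0 < eta /\ eta <= d1 /\ eta <= d2 /\ eta <= c1) as [Heta [E1 [E2 E3]]].
    { unfold eta. pose proof (Rmin_l (Rmin d1 d2) c1). pose proof (Rmin_r (Rmin d1 d2) c1).
      pose proof (Rmin_l d1 d2). pose proof (Rmin_r d1 d2).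
      assert (0 < Rmin (Rmin d1 d2) c1) by (repeat apply Rmin_glb_lt; lra). lra. }
    destruct (Qn_dense ((c1 - eta) / c) (c1 / c)) as [k [m [n Q]]].
    { unfold Rdiv. apply Rmult_lt_compat_r. apply Rinv_0_lt_compat; lra. lra. }
    set (s := Qn k m n) in *.
    assert (Q1 : c1 - eta < s * c < c1).
    { destruct Q as [q1 q2]. apply (Rmult_lt_compat_r c) in q1; auto. apply (Rmult_lt_compat_r c) in q2; auto.
      replace ((c1 - eta) / c * c) with (c1 - eta) in q1 by (field; lra).
      replace (c1 / c * c) with c1 in q2 by (field; lra). lra. }
    exists k, m, n. fold s. split. split; nra.
    assert (A1 : Rabs (u1 t (s * c) x - u1 t c1 x) < eps / 2) by (apply K1; apply Rabs_def1; lra).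
    assert (A2 : Rabs (u2 t ((1 - s) * c) x - u2 t (c - c1) x) < eps / 2) by (apply K2; apply Rabs_def1; lra).
    apply Rabs_def2 in A1. apply Rabs_def2 in A2. unfold eps in *. lra.
  - intros [k [m [n [hs ha]]]]. eapply Rlt_le_trans. exact ha. apply (HS t c x hd).
    exists (Qn k m n * c). split. split; nra. f_equal. f_equal. ring.
Qed.

Lemma supconv_measurable : measurable3 d u.
Proof.
  apply measurable3_of_superlevel. intro a.
  set (S := fun s (p : Pt d) => u1 (fst (fst p)) (s * snd (fst p)) (snd p) +
                                u2 (fst (fst p)) ((1 - s) * snd (fst p)) (snd p)).
  apply (borel_ext d (fun p => exists k m n, 0 < Qn k m n < 1 /\ superlevel d (S (Qn k m n)) a p)).
  - intros [[t c] x]. unfold superlevel, S, uncurry3, in_dom. simpl. split.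
    + intros [k [m [n [hs [hd ha]]]]]. split; auto.
      apply (supconv_gt_rational_split t c x a hd). exists k, m, n. auto.
    + intros [hd ha]. destruct (proj1 (supconv_gt_rational_split t c x a hd) ha) as [k [m [n [hs H]]]].
      exists k, m, n. auto.
  - do 3 (apply borel_union; intro). apply borel_and_const. intros hs.
    unfold S. apply superlevel_plus; apply superlevel_scale_c; try apply HU1; try apply HU2; lra.
Qed.

End SupconvMeasurable.

Section SupConvolution.
Variable d : nat.
Variables (u1 u1c u1cc : fun3 d) (u1cx : 'I_d -> fun3 d).
Variables (u2 u2c u2cc : fun3 d) (u2cx : 'I_d -> fun3 d).
Variables (u f : fun3 d).
Hypothesis HU1 : U1 d u1.
Hypothesis HD1 : U2_data u1 u1c u1cc u1cx.
Hypothesis HU2 : U1 d u2.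
Hypothesis HD2 : U2_data u2 u2c u2cc u2cx.
Hypothesis HS : is_supconv d u1 u2 u.
Hypothesis Hf : forall t c x, dom d t c x ->
  0 < f t c x < c /\ u1c t (f t c x) x = u2c t (c - f t c x) x.

Local Notation gap := (marginal_gap d u1c u2c).

Lemma f_pos t c x : dom d t c x -> 0 < f t c x.
Proof. intros hd. apply (Hf t c x hd). Qed.

Lemma f_lt t c x : dom d t c x -> 0 < c - f t c x.
Proof. intros hd. destruct (Hf t c x hd) as [[_ h] _]. lra. Qed.

Lemma gap_f t c x : dom d t c x -> gap t c x (f t c x) = 0.
Proof. intros hd. unfold marginal_gap. destruct (Hf t c x hd) as [_ E]. lra. Qed.

Lemma supconv_ge t c x y : dom d t c x -> 0 < y < c -> u1 t y x + u2 t (c - y) x <= u t c x.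
Proof. intros hd hy. apply (HS t c x hd). exists y. split; auto. Qed.

Lemma split_value_derivative t c x y : 0 <= t <= 1 -> 0 < y < c ->
  derivable_pt_lim (fun z => u1 t z x + u2 t (c - z) x) y (- gap t c x y).
Proof.
  intros ht hy. unfold marginal_gap.
  replace (- (u2c t (c - y) x - u1c t y x)) with (u1c t y x + u2c t (c - y) x * (0 - 1)) by ring.
  apply (derivable_pt_lim_plus (fun z => u1 t z x) (fun z => u2 t (c - z) x)).
  - apply (dc_u HD1). split; auto; lra.
  - apply (derivable_pt_lim_comp (fun z => c - z) (fun z => u2 t z x)).
    + apply (derivable_pt_lim_minus (fun _ => c) (fun z => z)).
      apply derivable_pt_lim_const. apply derivable_pt_lim_id.
    + apply (dc_u HD2). split; auto; lra.
Qed.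

Lemma split_value_le_optimal t c x y : dom d t c x -> 0 < y < c ->
  u1 t y x + u2 t (c - y) x <= u1 t (f t c x) x + u2 t (c - f t c x) x.
Proof.
  intros hd hy. pose proof hd as [ht hc]. pose proof (Hf t c x hd) as [hf _].
  pose proof (gap_f t c x hd) as G0. set (f0 := f t c x) in *.
  destruct (MVT_between (fun z => u1 t z x + u2 t (c - z) x) (fun z => - gap t c x z) y f0)
    as [xi [Hxi E]].
  { intros s hs. apply split_value_derivative; auto.
    unfold Rmin, Rmax in hs. destruct (Rle_dec y f0); lra. }
  cbv beta in E.
  assert (Hsign : 0 <= - gap t c x xi * (f0 - y)).
  { unfold Rmin, Rmax in Hxi. destruct (Rle_dec y f0).
    - assert (gap t c x xi <= 0).
      { destruct (Req_dec xi f0) as [->|N]. lra.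
        left. rewrite <- G0. apply marginal_gap_increasing with (1 := HD1) (2 := HD2); auto; lra. }
      nra.
    - assert (0 <= gap t c x xi).
      { destruct (Req_dec xi f0) as [->|N]. lra.
        left. rewrite <- G0. apply marginal_gap_increasing with (1 := HD1) (2 := HD2); auto; lra. }
      nra. }
  lra.
Qed.

Lemma supconv_at_optimal t c x : dom d t c x -> u t c x = u1 t (f t c x) x + u2 t (c - f t c x) x.
Proof.
  intros hd. destruct (HS t c x hd) as [H1 H2]. destruct (Hf t c x hd) as [hf _].
  apply Rle_antisym.
  - apply H2. intros v [y [hy ->]]. apply split_value_le_optimal; auto.
  - apply H1. exists (f t c x). split; auto.
Qed.

Lemma supconv_increasing t x a b : 0 <= t <= 1 -> 0 < a -> a < b -> u t a x < u t b x.
Proof.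
  intros ht ha hab. assert (hda : dom d t a x) by (split; auto).
  destruct (Hf t a x hda) as [hf _]. rewrite (supconv_at_optimal t a x hda).
  set (fa := f t a x) in *.
  assert (u1 t fa x < u1 t (fa + (b - a)) x) by (apply (U1_increasing d u1 HU1); auto; lra).
  assert (u1 t (fa + (b - a)) x + u2 t (b - (fa + (b - a))) x <= u t b x)
    by (apply supconv_ge; [split; auto; lra | lra]).
  replace (b - (fa + (b - a))) with (a - fa) in H0 by ring. lra.
Qed.

(* concavity of [u]: the convex combination of two optimal splits is a split of the combination *)
Lemma supconv_strictly_concave t x a b l : 0 <= t <= 1 -> 0 < a -> 0 < b -> a <> b -> 0 < l < 1 ->
  l * u t a x + (1 - l) * u t b x < u t (l * a + (1 - l) * b) x.
Proof.
  intros ht ha hb hab hl.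
  assert (hda : dom d t a x) by (split; auto). assert (hdb : dom d t b x) by (split; auto).
  destruct (Hf t a x hda) as [hfa _]. destruct (Hf t b x hdb) as [hfb _].
  rewrite (supconv_at_optimal t a x hda), (supconv_at_optimal t b x hdb).
  set (fa := f t a x) in *. set (fb := f t b x) in *.
  set (y := l * fa + (1 - l) * fb).
  assert (G : u1 t y x + u2 t (l * (a - fa) + (1 - l) * (b - fb)) x <= u t (l * a + (1 - l) * b) x).
  { replace (l * (a - fa) + (1 - l) * (b - fb)) with (l * a + (1 - l) * b - y) by (unfold y; ring).
    apply supconv_ge; [split; auto|]; unfold y; nra. }
  assert (A1 := U1_concave d u1 HU1 t x fa fb l ht ltac:(lra) ltac:(lra) hl). fold y in A1.
  assert (A2 := U1_concave d u2 HU2 t x (a - fa) (b - fb) l ht ltac:(lra) ltac:(lra) hl).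
  assert (S : l * u1 t fa x + (1 - l) * u1 t fb x < u1 t y x \/
              l * u2 t (a - fa) x + (1 - l) * u2 t (b - fb) x
               < u2 t (l * (a - fa) + (1 - l) * (b - fb)) x).
  { destruct (Req_dec fa fb) as [E|E].
    - right. apply (U1_strictly_concave d u2 HU2); auto; lra.
    - left. apply (U1_strictly_concave d u1 HU1); auto; lra. }
  destruct S; lra.
Qed.

Lemma supconv_midpoint t c x h : 0 <= t <= 1 -> Rabs h < c ->
  u t (c + h) x - u t c x <= u t c x - u t (c - h) x.
Proof.
  intros ht hh. apply Rabs_def2 in hh. destruct (Req_dec h 0) as [->|E].
  - rewrite Rplus_0_r, Rminus_0_r. lra.
  - assert (H := supconv_strictly_concave t x (c + h) (c - h) (/ 2) ht ltac:(lra) ltac:(lra) ltac:(lra) ltac:(lra)).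
    replace (/ 2 * (c + h) + (1 - / 2) * (c - h)) with c in H by field. lra.
Qed.

Definition supconv_uc t c x := u1c t (f t c x) x.

(* envelope theorem *)
Lemma supconv_dc : is_dc d u supconv_uc.
Proof.
  intros t c x hd. pose proof hd as [ht hc]. destruct (Hf t c x hd) as [hf _].
  unfold supconv_uc. set (f0 := f t c x) in *.
  apply (derivable_pt_lim_squeeze (fun y => u1 t y x) (fun c => u t c x) f0 c _ f0); try lra.
  - apply (dc_u HD1). split; auto; lra.
  - intros h hh. apply Rabs_def2 in hh. rewrite (supconv_at_optimal t c x hd). fold f0.
    assert (u1 t (f0 + h) x + u2 t (c + h - (f0 + h)) x <= u t (c + h) x)
      by (apply supconv_ge; [split; auto; lra | lra]).
    replace (c + h - (f0 + h)) with (c - f0) in H by ring. lra.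
  - intros h hh. apply supconv_midpoint; auto. lra.
Qed.

Lemma marginal_gap_cont_cx t c x y : dom d t c x -> 0 < y < c ->
  forall e, 0 < e -> exists dl, 0 < dl /\ forall c' x', y < c' -> Rabs (c' - c) < dl ->
    (forall j, Rabs (x' j - x j) < dl) -> Rabs (gap t c' x' y - gap t c x y) < e.
Proof.
  intros [ht hc] hy e He.
  destruct (uc_cont d u1 u1c u1cc u1cx HD1 t y x ltac:(split; auto; lra) (e/2)) as [d1 [Hd1 K1]]. lra.
  destruct (uc_cont d u2 u2c u2cc u2cx HD2 t (c - y) x ltac:(split; auto; lra) (e/2)) as [d2 [Hd2 K2]]. lra.
  exists (Rmin d1 d2). split. apply Rmin_glb_lt; lra.
  intros c' x' hc' hcc hxx. pose proof (Rmin_l d1 d2). pose proof (Rmin_r d1 d2).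
  assert (A1 : Rabs (u1c t y x' - u1c t y x) < e / 2).
  { apply K1. lra. unfold Rminus. rewrite Rplus_opp_r, Rabs_R0. lra. intro j. specialize (hxx j). lra. }
  assert (A2 : Rabs (u2c t (c' - y) x' - u2c t (c - y) x) < e / 2).
  { apply K2. lra. replace (c' - y - (c - y)) with (c' - c) by ring. lra. intro j. specialize (hxx j). lra. }
  unfold marginal_gap.
  replace (u2c t (c' - y) x' - u1c t y x' - (u2c t (c - y) x - u1c t y x)) with
    ((u2c t (c' - y) x' - u2c t (c - y) x) - (u1c t y x' - u1c t y x)) by ring.
  eapply Rle_lt_trans. apply Rabs_triang. rewrite Rabs_Ropp. lra.
Qed.

Lemma f_between t c x yl yr : dom d t c x -> 0 < yl -> yl < yr -> yr < c ->
  gap t c x yl < 0 -> 0 < gap t c x yr -> yl < f t c x < yr.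
Proof.
  intros hd hl hlr hr gl gr. pose proof (Hf t c x hd) as [hf _]. pose proof (gap_f t c x hd) as G0.
  assert (Hinc := marginal_gap_increasing d u1 u1c u1cc u1cx u2 u2c u2cc u2cx HD1 HD2 t c x).
  split; apply Rnot_le_lt; intro K; destruct (Rle_lt_or_eq_dec _ _ K) as [L|E].
  - assert (gap t c x (f t c x) < gap t c x yl) by (apply Hinc; auto; lra). lra.
  - rewrite E in G0. lra.
  - assert (gap t c x yr < gap t c x (f t c x)) by (apply Hinc; auto; lra). lra.
  - rewrite <- E in G0. lra.
Qed.

(* the optimal split is continuous: the gap keeps its sign at [f0 - et] and [f0 + et] nearby *)
Lemma f_cont : cont_cx d f.
Proof.
  intros t c x hd eta Heta. pose proof hd as [ht hc]. destruct (Hf t c x hd) as [hf _].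
  set (f0 := f t c x) in *.
  set (et := Rmin eta (Rmin f0 (c - f0) / 2)).
  assert (0 < et /\ et <= eta /\ et < f0 /\ et < c - f0) as [Het [Q1 [Q2 Q3]]].
  { unfold et. pose proof (Rmin_l eta (Rmin f0 (c - f0) / 2)). pose proof (Rmin_r eta (Rmin f0 (c - f0) / 2)).
    pose proof (Rmin_l f0 (c - f0)). pose proof (Rmin_r f0 (c - f0)).
    assert (0 < Rmin f0 (c - f0)) by (apply Rmin_glb_lt; lra).
    assert (0 < Rmin eta (Rmin f0 (c - f0) / 2)) by (apply Rmin_glb_lt; lra). lra. }
  pose proof (gap_f t c x hd) as G0. fold f0 in G0.
  assert (Hl : gap t c x (f0 - et) < 0).
  { rewrite <- G0. apply (marginal_gap_increasing d u1 u1c u1cc u1cx u2 u2c u2cc u2cx HD1 HD2); auto; lra. }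
  assert (Hr : 0 < gap t c x (f0 + et)).
  { rewrite <- G0. apply (marginal_gap_increasing d u1 u1c u1cc u1cx u2 u2c u2cc u2cx HD1 HD2); auto; lra. }
  destruct (marginal_gap_cont_cx t c x (f0 - et) hd ltac:(lra) (- gap t c x (f0 - et)) ltac:(lra)) as [d1 [Hd1 K1]].
  destruct (marginal_gap_cont_cx t c x (f0 + et) hd ltac:(lra) (gap t c x (f0 + et)) Hr) as [d2 [Hd2 K2]].
  set (dl := Rmin (Rmin d1 d2) (c - f0 - et)).
  assert (0 < dl /\ dl <= d1 /\ dl <= d2 /\ dl <= c - f0 - et) as [Hdl [D1 [D2 D3]]].
  { unfold dl. pose proof (Rmin_l (Rmin d1 d2) (c - f0 - et)). pose proof (Rmin_r (Rmin d1 d2) (c - f0 - et)).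
    pose proof (Rmin_l d1 d2). pose proof (Rmin_r d1 d2).
    assert (0 < Rmin (Rmin d1 d2) (c - f0 - et)) by (repeat apply Rmin_glb_lt; lra). lra. }
  exists dl. split. auto. intros c' x' hc' hcc hxx.
  assert (hcc' := hcc). apply Rabs_def2 in hcc'.
  assert (A1 := K1 c' x' ltac:(lra) ltac:(lra) ltac:(intro j; specialize (hxx j); lra)).
  assert (A2 := K2 c' x' ltac:(lra) ltac:(lra) ltac:(intro j; specialize (hxx j); lra)).
  apply Rabs_def2 in A1. apply Rabs_def2 in A2.
  assert (B := f_between t c' x' (f0 - et) (f0 + et) ltac:(split; auto) ltac:(lra) ltac:(lra) ltac:(lra) ltac:(lra) ltac:(lra)).
  apply Rabs_def1; lra.
Qed.

Definition supconv_ucc t c x :=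
  u1cc t (f t c x) x * u2cc t (c - f t c x) x / (u1cc t (f t c x) x + u2cc t (c - f t c x) x).

Definition supconv_ucx i t c x :=
  (u1cc t (f t c x) x * u2cx i t (c - f t c x) x + u2cc t (c - f t c x) x * u1cx i t (f t c x) x) /
  (u1cc t (f t c x) x + u2cc t (c - f t c x) x).

(* the increment of [u_c] computed through [u1_c] and, by the first-order condition, through [u2_c] *)
Lemma supconv_uc_increment t c x c' x' a b : dom d t c x -> dom d t c' x' ->
  supconv_uc t c' x' - supconv_uc t c x
    = dquot u1c t (f t c x) x' (f t c' x' - f t c x) a * (f t c' x' - f t c x)
      + (u1c t (f t c x) x' - u1c t (f t c x) x) /\
  supconv_uc t c' x' - supconv_uc t c x
    = dquot u2c t (c - f t c x) x' (c' - c - (f t c' x' - f t c x)) b * (c' - c - (f t c' x' - f t c x))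
      + (u2c t (c - f t c x) x' - u2c t (c - f t c x) x).
Proof.
  intros hd hd'. rewrite !dquot_mul. unfold supconv_uc.
  destruct (Hf t c x hd) as [_ E]. destruct (Hf t c' x' hd') as [_ E'].
  replace (f t c x + (f t c' x' - f t c x)) with (f t c' x') by ring.
  replace (c - f t c x + (c' - c - (f t c' x' - f t c x))) with (c' - f t c' x') by ring.
  split; [ring|]. rewrite <- E, <- E'. ring.
Qed.

Lemma f_tends_c t c x : dom d t c x -> tends R near0 (fun h => f t (c + h) x - f t c x) 0.
Proof.
  intros hd e He. pose proof hd as [ht hc].
  destruct (f_cont t c x hd e He) as [dl [Hdl K]].
  exists (Rmin dl c). split. apply Rmin_glb_lt; lra.
  intros h [hz hh]. pose proof (Rmin_l dl c). pose proof (Rmin_r dl c).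
  rewrite Rminus_0_r. apply K.
  - apply Rabs_def2 in hh. lra.
  - replace (c + h - c) with h by ring. lra.
  - intro j. unfold Rminus. rewrite Rplus_opp_r, Rabs_R0. auto.
Qed.

Lemma f_tends_x t c x i : dom d t c x ->
  tends R near0 (fun h => f t c (vupd d x i (x i + h)) - f t c x) 0.
Proof.
  intros hd e He. destruct (f_cont t c x hd e He) as [dl [Hdl K]].
  destruct (vupd_tends d x i dl Hdl) as [dl2 [Hdl2 K2]].
  exists dl2. split. auto. intros h hh. rewrite Rminus_0_r. apply K; auto.
  - apply hd.
  - unfold Rminus; rewrite Rplus_opp_r, Rabs_R0; auto.
Qed.

Lemma supconv_dcc : is_dc d supconv_uc supconv_ucc.
Proof.
  intros t c x hd. pose proof hd as [ht hc]. destruct (Hf t c x hd) as [hf _].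
  set (f0 := f t c x) in *. set (y0 := c - f0).
  set (D := fun h => f t (c + h) x - f0).
  set (A1 := fun h => dquot u1c t f0 x (D h) (u1cc t f0 x)).
  set (A2 := fun h => dquot u2c t y0 x (c + h - c - D h) (u2cc t y0 x)).
  assert (cD : tends R near0 D 0) by (apply f_tends_c; auto).
  assert (cA1 : tends R near0 A1 (u1cc t f0 x)).
  { apply (dquot_tends d u1c u1cc t f0 x D (fun _ => x)); auto using const_tends.
    apply (dc_uc HD1). apply (cont_ucc HD1). split; auto; lra. }
  assert (cA2 : tends R near0 A2 (u2cc t y0 x)).
  { apply (dquot_tends d u2c u2cc t y0 x (fun h => c + h - c - D h) (fun _ => x)); auto using const_tends.
    apply (dc_uc HD2). apply (cont_ucc HD2). split; auto; unfold y0; lra.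
    replace 0 with (0 - 0) by ring. apply tends_minus; auto. exact near0_mono.
    intros e He. exists e. split. auto. intros h [_ hh]. replace (c + h - c - 0) with h by ring. auto. }
  assert (n1 : u1cc t f0 x < 0) by (apply (ucc_neg HD1); split; auto; lra).
  assert (n2 : u2cc t y0 x < 0) by (apply (ucc_neg HD2); split; auto; unfold y0; lra).
  assert (Incr : forall h, near0 c h ->
    supconv_uc t (c + h) x - supconv_uc t c x = A1 h * D h + 0 * h /\
    A1 h * D h + 0 * h = - A2 h * D h + A2 h * h).
  { intros h [_ hh]. apply Rabs_def2 in hh.
    destruct (supconv_uc_increment t c x (c + h) x (u1cc t f0 x) (u2cc t y0 x) hd ltac:(split; auto; lra))
      as [E1 E2].
    fold f0 y0 in E1, E2. unfold A1, A2, D.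
    split; [|transitivity (supconv_uc t (c + h) x - supconv_uc t c x)];
      [rewrite E1 | rewrite E1 | rewrite E2]; ring. }
  apply derivable_pt_lim_tends.
  apply (tends_eventually_ext R near0 near0_mono (fun h => (A1 h * D h + 0 * h) / h) _ _ c hc).
  - intros h hh. now rewrite (proj1 (Incr h hh)).
  - unfold supconv_ucc. fold f0 y0.
    replace (u1cc t f0 x * u2cc t y0 x / (u1cc t f0 x + u2cc t y0 x)) with
      ((u1cc t f0 x * u2cc t y0 x + u2cc t y0 x * 0) / (u1cc t f0 x + u2cc t y0 x)) by (field; lra).
    apply (implicit_quotient_tends A1 A2 (fun _ => 0) A2 D _ _ _ _ c cA1 cA2 (tends_const R near0 _) cA2);
      [lra | auto |]. intros h hh. apply (proj2 (Incr h hh)).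
Qed.

Lemma supconv_dx i : is_dx d supconv_uc i (supconv_ucx i).
Proof.
  intros t c x hd. pose proof hd as [ht hc]. destruct (Hf t c x hd) as [hf _].
  set (f0 := f t c x) in *. set (y0 := c - f0).
  set (Xh := fun h => vupd d x i (x i + h)).
  set (D := fun h => f t c (Xh h) - f0).
  set (A1 := fun h => dquot u1c t f0 (Xh h) (D h) (u1cc t f0 x)).
  set (A2 := fun h => dquot u2c t y0 (Xh h) (c - c - D h) (u2cc t y0 x)).
  set (B1 := fun h => (u1c t f0 (Xh h) - u1c t f0 x) / h).
  set (B2 := fun h => (u2c t y0 (Xh h) - u2c t y0 x) / h).
  assert (hd1 : dom d t f0 x) by (split; auto; lra).
  assert (hd2 : dom d t y0 x) by (split; auto; unfold y0; lra).
  assert (cD : tends R near0 D 0) by (apply f_tends_x; auto).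
  assert (cA1 : tends R near0 A1 (u1cc t f0 x)).
  { apply (dquot_tends d u1c u1cc t f0 x D Xh); auto.
    apply (dc_uc HD1). apply (cont_ucc HD1). apply vupd_tends. }
  assert (cA2 : tends R near0 A2 (u2cc t y0 x)).
  { apply (dquot_tends d u2c u2cc t y0 x (fun h => c - c - D h) Xh); auto.
    apply (dc_uc HD2). apply (cont_ucc HD2).
    replace 0 with (c - c - 0) by ring. apply tends_minus; auto using tends_const. exact near0_mono.
    apply vupd_tends. }
  assert (cB1 : tends R near0 B1 (u1cx i t f0 x)) by (apply (dx_uc_tends d u1 u1c u1cc u1cx HD1); auto).
  assert (cB2 : tends R near0 B2 (u2cx i t y0 x)) by (apply (dx_uc_tends d u2 u2c u2cc u2cx HD2); auto).
  assert (n1 : u1cc t f0 x < 0) by (apply (ucc_neg HD1); auto).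
  assert (n2 : u2cc t y0 x < 0) by (apply (ucc_neg HD2); auto).
  assert (Incr : forall h, near0 1 h ->
    supconv_uc t c (Xh h) - supconv_uc t c x = A1 h * D h + B1 h * h /\
    A1 h * D h + B1 h * h = - A2 h * D h + B2 h * h).
  { intros h [hz _].
    destruct (supconv_uc_increment t c x c (Xh h) (u1cc t f0 x) (u2cc t y0 x) hd ltac:(split; auto))
      as [E1 E2].
    fold f0 y0 in E1, E2.
    assert (EB1 : B1 h * h = u1c t f0 (Xh h) - u1c t f0 x) by (unfold B1; field; auto).
    assert (EB2 : B2 h * h = u2c t y0 (Xh h) - u2c t y0 x) by (unfold B2; field; auto).
    rewrite EB1, EB2. unfold A1, A2, D.
    split; [|transitivity (supconv_uc t c (Xh h) - supconv_uc t c x)];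
      [rewrite E1 | rewrite E1 | rewrite E2]; ring. }
  apply derivable_pt_lim_tends. rewrite vupd_id.
  apply (tends_eventually_ext R near0 near0_mono (fun h => (A1 h * D h + B1 h * h) / h) _ _ 1 ltac:(lra)).
  - intros h hh. now rewrite <- (proj1 (Incr h hh)).
  - unfold supconv_ucx. fold f0 y0.
    apply (implicit_quotient_tends A1 A2 B1 B2 D _ _ _ _ 1 cA1 cA2 cB1 cB2); [lra | lra |].
    intros h hh. apply (proj2 (Incr h hh)).
Qed.

Lemma supconv_uc_cont : cont_cx d supconv_uc.
Proof. apply (cont_cx_comp d u1c f). apply (uc_cont d u1 u1c u1cc u1cx HD1). apply f_cont. apply f_pos. Qed.

Lemma complement_cont : cont_cx d (fun t c x => c - f t c x).
Proof.
  apply cont_cx_tends. intros t c x hd. apply tends_minus. intros; eapply near_cx_mono; eauto.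
  apply tends_fst_near_cx. apply (proj1 (cont_cx_tends d f) f_cont). auto.
Qed.

Lemma cont_cx_at_f (g : fun3 d) : cont_cx d g -> cont_cx d (fun t c x => g t (f t c x) x).
Proof. intros Hg. apply (cont_cx_comp d g f); auto using f_cont, f_pos. Qed.

Lemma cont_cx_at_complement (g : fun3 d) : cont_cx d g -> cont_cx d (fun t c x => g t (c - f t c x) x).
Proof. intros Hg. apply (cont_cx_comp d g (fun t c x => c - f t c x)); auto using complement_cont, f_lt. Qed.

Lemma uccs_neg t c x : dom d t c x -> u1cc t (f t c x) x < 0 /\ u2cc t (c - f t c x) x < 0.
Proof.
  intros hd. pose proof hd as [ht hc]. split.
  - apply (ucc_neg HD1). split; auto. apply f_pos; auto.
  - apply (ucc_neg HD2). split; auto. apply f_lt; auto.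
Qed.

Lemma cont_cx_div_uccs (P : fun3 d) : cont_cx d P ->
  cont_cx d (fun t c x => P t c x / (u1cc t (f t c x) x + u2cc t (c - f t c x) x)).
Proof.
  intros HP. apply cont_cx_tends. intros t c x hd.
  assert (NM : forall d1 d2 p, 0 < d1 -> d1 <= d2 -> near_cx c x d1 p -> near_cx c x d2 p)
    by (intros; eapply near_cx_mono; eauto).
  assert (C1 := proj1 (cont_cx_tends d _) (cont_cx_at_f u1cc (cont_ucc HD1)) t c x hd).
  assert (C2 := proj1 (cont_cx_tends d _) (cont_cx_at_complement u2cc (cont_ucc HD2)) t c x hd).
  apply tends_div; auto. apply (proj1 (cont_cx_tends d P) HP); auto. apply tends_plus; auto.
  pose proof (uccs_neg t c x hd). lra.
Qed.

Lemma supconv_ucc_cont : cont_cx d supconv_ucc.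
Proof.
  apply cont_cx_div_uccs, cont_cx_mult.
  apply cont_cx_at_f, (cont_ucc HD1). apply cont_cx_at_complement, (cont_ucc HD2).
Qed.

Lemma supconv_ucx_cont i : cont_cx d (supconv_ucx i).
Proof.
  apply cont_cx_div_uccs, cont_cx_plus; apply cont_cx_mult.
  apply cont_cx_at_f, (cont_ucc HD1). apply cont_cx_at_complement, (cont_ucx HD2).
  apply cont_cx_at_complement, (cont_ucc HD2). apply cont_cx_at_f, (cont_ucx HD1).
Qed.

Lemma supconv_ucc_neg t c x : dom d t c x -> supconv_ucc t c x < 0.
Proof.
  intros hd. unfold supconv_ucc. destruct (uccs_neg t c x hd) as [n1 n2].
  unfold Rdiv. apply Rmult_pos_neg. nra. apply Rinv_neg. lra.
Qed.

Lemma supconv_ratio_bound : exists N, 0 < N /\ forall t c x i, dom d t c x ->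
  - c * supconv_ucc t c x / supconv_uc t c x + Rabs (supconv_ucx i t c x) / supconv_uc t c x <= N.
Proof.
  destruct (ratio_bound HD1) as [N1 [HN1 K1]].
  destruct (ratio_bound HD2) as [N2 [HN2 K2]].
  exists (N1 + N2). split. lra.
  intros t c x i hd. pose proof hd as [ht hc]. destruct (Hf t c x hd) as [hf E].
  specialize (K1 t (f t c x) x i ltac:(split; auto; lra)).
  specialize (K2 t (c - f t c x) x i ltac:(split; auto; lra)).
  rewrite <- E in K2. destruct (uccs_neg t c x hd).
  unfold supconv_ucc, supconv_ucx, supconv_uc.
  apply (harmonic_ratio_bound c (f t c x)); auto.
  apply (uc_pos d u1 u1c u1cc u1cx HU1 HD1). split; auto; lra.
Qed.

Lemma supconv_inada t x : 0 <= t <= 1 -> Inada (fun c => u t c x).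
Proof.
  intros ht. split; [|split].
  - intros a b l ha hb hab hl. apply supconv_strictly_concave; auto.
  - intros a b ha hab. apply supconv_increasing; auto.
  - exists (fun c => supconv_uc t c x). split; [|split; [|split]].
    + intros c hc. apply supconv_dc. split; auto.
    + intros c hc. apply cont_cx_continuity_pt. apply supconv_uc_cont. split; auto.
    + intros M. destruct (uc_large_near0 d u1 u1c u1cc u1cx HU1 HD1 t x ht M) as [e [He K]].
      exists e. split. auto. intros c hc. unfold supconv_uc.
      destruct (Hf t c x ltac:(split; auto; lra)) as [hf _]. apply K. lra.
    + intros e He.
      destruct (uc_small_near_infty d u1 u1c u1cc u1cx HU1 HD1 t x ht e He) as [M1 K1].
      destruct (uc_small_near_infty d u2 u2c u2cc u2cx HU2 HD2 t x ht e He) as [M2 K2].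
      exists (2 * (Rabs M1 + Rabs M2) + 1). intros c hc.
      pose proof (Rle_abs M1). pose proof (Rle_abs M2). pose proof (Rabs_pos M1). pose proof (Rabs_pos M2).
      assert (hd : dom d t c x) by (split; auto; lra).
      destruct (Hf t c x hd) as [hf E].
      assert (0 < supconv_uc t c x) by (apply (uc_pos d u1 u1c u1cc u1cx HU1 HD1); split; auto; lra).
      rewrite Rabs_right by lra. unfold supconv_uc.
      destruct (Rle_or_lt (c / 2) (f t c x)).
      * apply K1; lra.
      * rewrite E. apply K2; lra.
Qed.

Lemma supconv_le_sum t c x : dom d t c x -> u t c x <= u1 t c x + u2 t c x.
Proof.
  intros hd. pose proof hd as [ht hc]. destruct (Hf t c x hd) as [hf _].
  rewrite supconv_at_optimal by auto.
  assert (u1 t (f t c x) x < u1 t c x) by (apply (U1_increasing d u1 HU1); auto; lra).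
  assert (u2 t (c - f t c x) x < u2 t c x) by (apply (U1_increasing d u2 HU2); auto; lra).
  lra.
Qed.

Lemma supconv_growth : exists N, 0 < N /\ forall t x y, 0 <= t <= 1 ->
  Rabs (u t (exp y) x) <= exp (N * (1 + vnorm d x + Rabs y)).
Proof.
  destruct (U1_growth_half d u1 HU1) as [N1 [HN1 K1]].
  destruct (U1_growth_half d u2 HU2) as [N2 [HN2 K2]].
  exists (N1 + N2 + 1). split. lra. intros t x y ht.
  set (K := 1 + vnorm d x + Rabs y).
  assert (HK : 1 <= K) by (unfold K; pose proof (vnorm_nonneg d x); pose proof (Rabs_pos y); lra).
  assert (hd : dom d t (exp y) x) by (split; auto; apply exp_pos).
  destruct (K1 t x y ht) as [A1 B1]. destruct (K2 t x y ht) as [A2 B2]. fold K in A1, B1, A2, B2.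
  assert (U : u t (exp y) x <= u1 t (exp y) x + u2 t (exp y) x) by (apply supconv_le_sum; auto).
  assert (L : u1 t (exp y / 2) x + u2 t (exp y - exp y / 2) x <= u t (exp y) x)
    by (apply supconv_ge; auto; pose proof (exp_pos y); lra).
  replace (exp y - exp y / 2) with (exp y / 2) in L by field.
  assert (S1 : exp (N1 * K) <= exp ((N1 + N2) * K)) by (apply exp_le; nra).
  assert (S2 : exp (N2 * K) <= exp ((N1 + N2) * K)) by (apply exp_le; nra).
  assert (S3 : 2 * exp ((N1 + N2) * K) <= exp ((N1 + N2 + 1) * K)).
  { apply Rle_trans with (exp 1 * exp ((N1 + N2) * K)).
    - apply Rmult_le_compat_r. left; apply exp_pos. pose proof (exp_ineq1 1 ltac:(lra)). lra.
    - rewrite <- exp_plus. apply exp_le. nra. }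
  apply Rabs_le_between in A1. apply Rabs_le_between in A2.
  apply Rabs_le_between in B1. apply Rabs_le_between in B2.
  apply Rabs_le. lra.
Qed.

Lemma supconv_U1_data : U1 d u /\ U2_data u supconv_uc supconv_ucc supconv_ucx.
Proof.
  split; [split; [|split]|constructor].
  - apply (supconv_measurable d u1 u2 u HU1 HU2 HS).
  - apply supconv_inada.
  - apply supconv_growth.
  - apply supconv_dc.
  - apply supconv_dcc.
  - apply supconv_dx.
  - apply supconv_ucc_cont.
  - apply supconv_ucx_cont.
  - apply supconv_ucc_neg.
  - apply supconv_ratio_bound.
Qed.

End SupConvolution.

Lemma U2_data_derivatives_agree d (u uc ucc : fun3 d) ucx (uc' ucc' : fun3 d) ucx' :
  U2_data u uc ucc ucx -> is_dc d u uc' -> is_dc d uc' ucc' -> (forall i, is_dx d uc' i (ucx' i)) ->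
  (forall t c x, dom d t c x -> uc' t c x = uc t c x) /\
  (forall t c x, dom d t c x -> ucc' t c x = ucc t c x) /\
  (forall t c x i, dom d t c x -> ucx' i t c x = ucx i t c x).
Proof.
  intros HD h1 h2 h3.
  assert (A1 : forall t c x, dom d t c x -> uc' t c x = uc t c x).
  { intros t c x hd. apply (uniqueness_limite (fun c => u t c x) c). apply h1; auto.
    apply (dc_u HD); auto. }
  split; [exact A1|split].
  - intros t c x hd. pose proof hd as [ht hc].
    apply (uniqueness_limite (fun c => uc' t c x) c). apply h2; auto.
    apply (derivable_pt_lim_locally_ext (fun c => uc t c x) _ c 0 (c + 1)). lra.
    intros y hy. symmetry. apply A1. split; auto; lra.
    apply (dc_uc HD); auto.
  - intros t c x i hd. pose proof hd as [ht hc].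
    apply (uniqueness_limite (fun h => uc' t c (vupd d x i h)) (x i)). apply h3; auto.
    apply (derivable_pt_lim_ext (fun h => uc t c (vupd d x i h))).
    intros y. symmetry. apply A1. split; auto.
    apply (dx_uc HD); auto.
Qed.

Lemma U2_data_transfer d (u uc ucc : fun3 d) ucx (uc' ucc' : fun3 d) ucx' :
  U2_data u uc ucc ucx -> is_dc d u uc' -> is_dc d uc' ucc' -> (forall i, is_dx d uc' i (ucx' i)) ->
  U2_data u uc' ucc' ucx'.
Proof.
  intros HD h1 h2 h3. destruct (U2_data_derivatives_agree d u uc ucc ucx uc' ucc' ucx' HD h1 h2 h3)
    as [A1 [A2 A3]].
  constructor; auto.
  - intros t c x hd e He. destruct (cont_ucc HD t c x hd e He) as [dl [Hdl K]].
    exists dl. split; auto. intros c' x' hc' h4 h5. pose proof hd as [ht hc].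
    rewrite (A2 t c' x'), (A2 t c x); auto. split; auto.
  - intros i t c x hd e He. destruct (cont_ucx HD i t c x hd e He) as [dl [Hdl K]].
    exists dl. split; auto. intros c' x' hc' h4 h5. pose proof hd as [ht hc].
    rewrite (A3 t c' x'), (A3 t c x); auto. split; auto.
  - intros t c x hd. rewrite A2; auto. apply (ucc_neg HD); auto.
  - destruct (ratio_bound HD) as [N [HN K]]. exists N. split; auto.
    intros t c x i hd. rewrite A1, A2, A3; auto.
Qed.

Lemma supconv_U2 d (u1 u2 u : fun3 d) : U2 d u1 -> U2 d u2 -> is_supconv d u1 u2 u -> U2 d u.
Proof.
  rewrite !U2E. intros [HU1 [u1c [u1cc [u1cx HD1]]]] [HU2 [u2c [u2cc [u2cx HD2]]]] HS.
  set (f := fun t c x => epsilon (inhabits 0) (fun y => 0 < y < c /\ u1c t y x = u2c t (c - y) x)).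
  assert (Hf : forall t c x, dom d t c x -> 0 < f t c x < c /\ u1c t (f t c x) x = u2c t (c - f t c x) x).
  { intros t c x hd. apply epsilon_spec.
    apply (optimal_split_exists d u1 u1c u1cc u1cx u2 u2c u2cc u2cx HU1 HD1 HU2 HD2 t c x hd). }
  destruct (supconv_U1_data d u1 u1c u1cc u1cx u2 u2c u2cc u2cx u f HU1 HD1 HU2 HD2 HS Hf) as [HU HD].
  split; [exact HU|]. eexists _, _, _. exact HD.
Qed.

Theorem lemma5 (d : nat) (u1 u2 u : fun3 d) :
  U2 d u1 -> U2 d u2 -> is_supconv d u1 u2 u ->
  U2 d u /\
  forall (u1c u1cc u2c u2cc uc ucc : fun3 d)
         (u1cx u2cx ucx : 'I_d -> fun3 d) (f : fun3 d),
    is_dc d u1 u1c -> is_dc d u1c u1cc -> (forall i, is_dx d u1c i (u1cx i)) ->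
    is_dc d u2 u2c -> is_dc d u2c u2cc -> (forall i, is_dx d u2c i (u2cx i)) ->
    is_dc d u uc -> is_dc d uc ucc -> (forall i, is_dx d uc i (ucx i)) ->
    (forall t c x, dom d t c x ->
       0 < f t c x < c /\ u1c t (f t c x) x = u2c t (c - f t c x) x) ->
    forall t c x, dom d t c x ->
      uc t c x = u1c t (f t c x) x /\
      uc t c x / ucc t c x =
        u1c t (f t c x) x / u1cc t (f t c x) x
        + u2c t (c - f t c x) x / u2cc t (c - f t c x) x /\
      (forall i : 'I_d,
        ucx i t c x / ucc t c x =
          u1cx i t (f t c x) x / u1cc t (f t c x) x
          + u2cx i t (c - f t c x) x / u2cc t (c - f t c x) x).
Proof.
  intros H1 H2 HS. split; [exact (supconv_U2 d u1 u2 u H1 H2 HS)|].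
  apply U2E in H1 as [HU1 [w1c [w1cc [w1cx HW1]]]]. apply U2E in H2 as [HU2 [w2c [w2cc [w2cx HW2]]]].
  intros u1c u1cc u2c u2cc uc ucc u1cx u2cx ucx f h1 h2 h3 h4 h5 h6 h7 h8 h9 Hf t c x hd.
  assert (HD1 := U2_data_transfer d u1 w1c w1cc w1cx u1c u1cc u1cx HW1 h1 h2 h3).
  assert (HD2 := U2_data_transfer d u2 w2c w2cc w2cx u2c u2cc u2cx HW2 h4 h5 h6).
  destruct (supconv_U1_data d u1 u1c u1cc u1cx u2 u2c u2cc u2cx u f HU1 HD1 HU2 HD2 HS Hf) as [_ HD].
  destruct (U2_data_derivatives_agree d u _ _ _ uc ucc ucx HD h7 h8 h9) as [Ec [Ecc Ecx]].
  pose proof hd as [ht hc]. destruct (Hf t c x hd) as [hf E].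
  assert (n1 : u1cc t (f t c x) x < 0) by (apply (ucc_neg HD1); split; auto; lra).
  assert (n2 : u2cc t (c - f t c x) x < 0) by (apply (ucc_neg HD2); split; auto; lra).
  rewrite (Ec t c x hd), (Ecc t c x hd). unfold supconv_uc, supconv_ucc.
  split; [reflexivity|split].
  - rewrite <- E. field. repeat split; lra.
  - intro i. rewrite (Ecx t c x i hd). unfold supconv_ucx. field. repeat split; lra.
Qed.
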